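(* Let $\Lambda\in(\mathbb{R}\setminus\{0\})^n$ and let $h$ be a real-valued function in $C^{1,1}_{\mathrm{loc}}(\mathbb{C}^n)$, and set $P=2\mathbf{i}\,\partial h/\partial\bar z$. Then the limit $$\langle h\rangle(a)=\lim_{T\to\pm\infty}\frac{1}{|T|}\int_0^T h(\Phi_{-\Lambda t}a)\,dt$$ exists for all $a\in\mathbb{C}^n$, $\langle h\rangle\in C^{1,1}_{\mathrm{loc}}(\mathbb{C}^n)$, and for every $1\le j\le n$, $$2\mathbf{i}\frac{\partial}{\partial\bar a_j}\langle h\rangle(a)=\langle\langle P\rangle\rangle_j(a).$$ That is, the effective equation $\partial_\tau a=\langle\langle P\rangle\rangle(a)$ is Hamiltonian with Hamiltonian $\langle h\rangle$.
   Context: $C^{1,1}_{\mathrm{loc}}(\mathbb{C}^n)=\{u\in C^1(\mathbb{C}^n): u_z,u_{\bar z}\text{ are locally Lipschitz}\}$. $\partial/\partial\bar z_j=\frac12(\partial_{x_j}+\mathbf{i}\partial_{y_j})$ for $z_j=x_j+\mathbf{i}y_j$. $\Phi_w=\mathrm{diag}(e^{\mathbf{i}w_1},\dots,e^{\mathbf{i}w_n})$. $\langle\langle P\rangle\rangle(a)=\lim_{T\to\pm\infty}\frac1{|T|}\int_0^T\Phi_{\Lambda t}P(\Phi_{-\Lambda t}a)\,dt$ (for $T<0$, $\int_0^T$ means $\int_T^0$). *)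

From Stdlib Require Import Reals.
From mathcomp Require Import ssreflect ssrbool eqtype ssrnat fintype.
Open Scope R_scope.

(* Complex numbers as pairs (Re, Im). *)
Definition C : Type := (R * R)%type.
Definition Cmul (z w : C) : C :=
  (fst z * fst w - snd z * snd w, fst z * snd w + snd z * fst w).
Definition Csub (z w : C) : C := (fst z - fst w, snd z - snd w).
Definition Cnorm (z : C) : R := sqrt (fst z ^ 2 + snd z ^ 2).
Definition Cexpi (th : R) : C := (cos th, sin th).

Definition Cn (n : nat) : Type := 'I_n -> C.

Definition Phi {n : nat} (w : 'I_n -> R) (a : Cn n) : Cn n :=
  fun j => Cmul (Cexpi (w j)) (a j).

Definition upd {n : nat} (a : Cn n) (j : 'I_n) (c : C) : Cn n :=
  fun k => if k == j then c else a k.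

Definition pd_x {n : nat} (f : Cn n -> R) (a : Cn n) (j : 'I_n) (l : R) : Prop :=
  derivable_pt_lim (fun s => f (upd a j (s, snd (a j)))) (fst (a j)) l.
Definition pd_y {n : nat} (f : Cn n -> R) (a : Cn n) (j : 'I_n) (l : R) : Prop :=
  derivable_pt_lim (fun s => f (upd a j (fst (a j), s))) (snd (a j)) l.

Definition partials {n : nat} (f : Cn n -> R) (fx fy : 'I_n -> Cn n -> R) : Prop :=
  forall (a : Cn n) (j : 'I_n), pd_x f a j (fx j a) /\ pd_y f a j (fy j a).

Definition near {n : nat} (d : R) (a b : Cn n) : Prop :=
  forall k, Rabs (fst (b k) - fst (a k)) < d /\ Rabs (snd (b k) - snd (a k)) < d.

Definition continuous_Cn {n : nat} (g : Cn n -> R) : Prop :=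
  forall (a : Cn n) (eps : R), 0 < eps ->
    exists d, 0 < d /\ forall b, near d a b -> Rabs (g b - g a) < eps.

(* locally Lipschitz (w.r.t. the sup norm on C^n = R^{2n}) complex-valued map:
   |g b - g c| <= L * d whenever every real coordinate of b - c is <= d *)
Definition loc_lipschitz {n : nat} (g : Cn n -> C) : Prop :=
  forall a : Cn n, exists r L, 0 < r /\
    forall b c, near r a b -> near r a c ->
      forall d, (forall k, Rabs (fst (b k) - fst (c k)) <= d /\
                           Rabs (snd (b k) - snd (c k)) <= d) ->
        Cnorm (Csub (g b) (g c)) <= L * d.

(* d/dz_j u = (u_x - i u_y)/2,  d/dzbar_j u = (u_x + i u_y)/2  for real-valued u *)
Definition dz_of {n : nat} (fx fy : 'I_n -> Cn n -> R) (j : 'I_n) (a : Cn n) : C :=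
  (fx j a / 2, - fy j a / 2).
Definition dzbar_of {n : nat} (fx fy : 'I_n -> Cn n -> R) (j : 'I_n) (a : Cn n) : C :=
  (fx j a / 2, fy j a / 2).

(* real-valued u in C^{1,1}_loc(C^n): C^1 (continuous partials) with
   u_z, u_zbar locally Lipschitz *)
Definition C11loc {n : nat} (u : Cn n -> R) : Prop :=
  exists fx fy : 'I_n -> Cn n -> R,
    partials u fx fy /\
    (forall j, continuous_Cn (fx j) /\ continuous_Cn (fy j)) /\
    (forall j, loc_lipschitz (dz_of fx fy j) /\ loc_lipschitz (dzbar_of fx fy j)).

Definition has_int (f : R -> R) (a b v : R) : Prop :=
  exists pr : Riemann_integrable f a b, RiemannInt pr = v.

(* lim_{T -> +-oo} (1/|T|) int_0^T f(t) dt = L, where for T < 0 the integral is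
   over [T,0]; both limits T -> +oo and T -> -oo exist and equal L. *)
Definition time_avg_cv (f : R -> R) (L : R) : Prop :=
  forall eps, 0 < eps -> exists M, 0 < M /\
    forall T, M < Rabs T -> exists v,
      has_int f (Rmin 0 T) (Rmax 0 T) v /\ Rabs (v / Rabs T - L) < eps.

(* P = 2 i dh/dzbar, i.e. P_j = i (h_x + i h_y) = (- h_y, h_x) *)
Definition Pvf {n : nat} (hx hy : 'I_n -> Cn n -> R) (b : Cn n) : Cn n :=
  fun j => (- hy j b, hx j b).

Definition flow_integrand {n : nat} (Lam : 'I_n -> R) (hx hy : 'I_n -> Cn n -> R)
  (a : Cn n) (t : R) : Cn n :=
  Phi (fun j => Lam j * t) (Pvf hx hy (Phi (fun j => - (Lam j * t)) a)).

From Pilot Require Import Defs.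
From Stdlib Require Import Reals Lra Lia ZArith List FunctionalExtensionality ClassicalEpsilon Classical.
From Coquelicot Require Import Coquelicot.
From mathcomp Require Import ssreflect ssrfun ssrbool eqtype ssrnat seq fintype finfun zify.
Open Scope R_scope.

(** For [w] in the torus [(R / 2 pi Z)^n] the functions [w |-> h (Phi_{-w} a)] and
  [w |-> Phi_w P (Phi_{-w} a)] are continuous on the torus, so along the linear
  flow [w = Lam t] they are Bohr almost periodic and their time averages [<h>]
  and [<<P>>] exist.  The proof proceeds in four stages:
  - compactness of boxes turns local bounds, continuity and Lipschitz bounds into
    uniform ones (Heine-Borel by induction on the dimension);
  - a pigeonhole argument on arcs of the circle shows that the almost periods of
    [t |-> Lam t] on the torus are relatively dense (Dirichlet/Kronecker);
  - Bohr's mean value theorem gives the time averages;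
  - a first-order estimate of [h] that is uniform along the orbit lets us
    differentiate under the average, giving [d<h>/dx_j = Im <<P>>_j] and
    [d<h>/dy_j = - Re <<P>>_j], i.e. [2 i d<h>/dabar_j = <<P>>_j]; averaging
    the Lipschitz integrands shows that these partials are locally Lipschitz. *)

Lemma abs_sub_le x y : Rabs (x - y) <= Rabs x + Rabs y.
Proof. have := Rabs_triang x (- y). rewrite Rabs_Ropp. unfold Rminus. lra. Qed.

Lemma abs_div_le x y K : 0 < y -> Rabs x <= K * y -> Rabs (x / y) <= K.
Proof.
  move=> Hy H. rewrite /Rdiv Rabs_mult Rabs_inv (Rabs_right y); last lra.
  apply: (Rmult_le_reg_r y) => //. rewrite Rmult_assoc Rinv_l; lra.
Qed.

Lemma le_of_le_eps x K C : 0 < C -> (forall eps, 0 < eps -> x <= K + eps * C) -> x <= K.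
Proof.
  move=> HC H. case: (Rle_dec x K) => // h.
  have := H ((x - K) / (2 * C)) ltac:(apply Rdiv_lt_0_compat; lra).
  have -> : (x - K) / (2 * C) * C = (x - K) / 2 by field; lra. lra.
Qed.

Lemma nat_unbounded x : exists N : nat, x <= INR N.
Proof.
  have [h1 h2] := archimed x.
  case: (Z_le_gt_dec 0 (up x)) => hp.
  - exists (Z.to_nat (up x)). rewrite INR_IZR_INZ Z2Nat.id //. lra.
  - exists 0%nat. have : IZR (up x) < 0 by apply IZR_lt; lia. rewrite /=. lra.
Qed.

Definition min_list (l : list R) : R := fold_right Rmin 1 l.
Definition max_list (l : list R) : R := fold_right Rmax 0 l.

Lemma min_list_pos l : (forall x, In x l -> 0 < x) -> 0 < min_list l.
Proof. elim: l => [|a l IH] /= H; [lra | apply Rmin_glb_lt; auto]. Qed.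

Lemma min_list_le l x : In x l -> min_list l <= x.
Proof.
  elim: l => [|a l IH] //= [<-|H]; first exact: Rmin_l.
  apply: Rle_trans (Rmin_r _ _) (IH H).
Qed.

Lemma max_list_ge0 l : 0 <= max_list l.
Proof. elim: l => [|a l IH] /=; [lra | apply: Rle_trans IH (Rmax_r _ _)]. Qed.

Lemma max_list_ge l x : In x l -> x <= max_list l.
Proof.
  elim: l => [|a l IH] //= [<-|H]; first exact: Rmax_l.
  apply: Rle_trans (IH H) (Rmax_r _ _).
Qed.

Definition fmax {T : finType} (f : T -> R) : R := max_list (map f (enum T)).

Lemma fmax_ge {T : finType} (f : T -> R) x : f x <= fmax f.
Proof. apply: max_list_ge. apply: in_map. apply/Iter.In_mem. by rewrite mem_enum. Qed.

Lemma fmax_ge0 {T : finType} (f : T -> R) : 0 <= fmax f.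
Proof. exact: max_list_ge0. Qed.

(** * Compactness of closed boxes *)

Lemma interval_cover M (rho : R -> R) : (forall x, 0 < rho x) ->
  exists l : list R, forall x, Rabs x <= M -> exists y, In y l /\ Rabs (x - y) < rho y.
Proof.
  move=> Hr.
  set F := Rtopology.mkfamily (fun _ => True) (fun y x => Rabs (x - y) < rho y) (fun _ _ => I).
  have cov : Rtopology.covering_open_set (fun c => -M <= c <= M) F.
  { split.
    - move=> x _. exists x. rewrite /= Rminus_diag Rabs_R0. exact: Hr.
    - move=> y x Hx. exists (mkposreal (rho y - Rabs (x - y)) ltac:(simpl in Hx; lra)).
      move=> z. rewrite /Rtopology.disc /= => Hz.
      have := Rabs_triang (z - x) (x - y). have -> : z - x + (x - y) = z - y by ring. lra. }
  have [D [Dc [l Hl]]] := Rtopology.compact_P3 (-M) M F cov.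
  exists l => x Hx.
  have [|y [Hy1 Hy2]] := Dc x; first by move: Hx; rewrite /Rabs; case: Rcase_abs; lra.
  exists y. split => //. by apply Hl.
Qed.

(* Points of [R^m] as sequences; [near_seq m r p q]: the first [m] coordinates differ by < r. *)
Definition near_seq (m : nat) (r : R) (p q : nat -> R) : Prop :=
  forall i, (i < m)%coq_nat -> Rabs (q i - p i) < r.
Definition in_cube (m : nat) (M : R) (q : nat -> R) : Prop :=
  forall i, (i < m)%coq_nat -> Rabs (q i) <= M.
Definition set_coord (p : nat -> R) (m : nat) (x : R) : nat -> R :=
  fun i => if Nat.eqb i m then x else p i.

(* The inductive step chooses, for each last coordinate x, a finite cover of the
   remaining cube with radii halved, and covers the last axis by [interval_cover]. *)
Lemma cube_cover m : forall M (r : (nat -> R) -> R), (forall p, 0 < r p) ->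
  exists l : list (nat -> R), forall q, in_cube m M q -> exists p, In p l /\ near_seq m (r p) p q.
Proof.
  elim: m => [|m IH] M r Hr.
  - exists [:: fun _ => 0] => q _. exists (fun _ => 0). split; [by left | move=> i Hi; lia].
  - have Hx : forall x : R, exists l : list (nat -> R), forall q, in_cube m M q ->
        exists p, In p l /\ near_seq m (r (set_coord p m x) / 2) p q.
    { move=> x. apply: IH => p. have := Hr (set_coord p m x). lra. }
    have [lx lxP] := choice _ Hx.
    set rho := fun x => min_list (map (fun p => r (set_coord p m x) / 2) (lx x)).
    have rho_pos : forall x, 0 < rho x.
    { move=> x. apply: min_list_pos => y /in_map_iff [p [<- _]]. have := Hr (set_coord p m x). lra. }
    have [xs Hxs] := interval_cover M rho rho_pos.
    exists (flat_map (fun x => map (fun p => set_coord p m x) (lx x)) xs) => q Hq.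
    have [y [Hy1 Hy2]] := Hxs (q m) (Hq m ltac:(lia)).
    have [p [Hp1 Hp2]] := lxP y q (fun i Hi => Hq i ltac:(lia)).
    have hrho : rho y <= r (set_coord p m y) / 2.
    { apply: min_list_le. apply/in_map_iff. by exists p. }
    have hr := Hr (set_coord p m y).
    exists (set_coord p m y). split.
    + apply/in_flat_map. exists y. split => //. exact: (in_map (fun p => set_coord p m y)).
    + move=> i Hi. rewrite {1}/set_coord. case: (Nat.eqb_spec i m) => [->|ne]; first lra.
      have := Hp2 i ltac:(lia). lra.
Qed.

Definition Cbox {n : nat} (M : R) (c : Cn n) : Prop :=
  forall k, Rabs (fst (c k)) <= M /\ Rabs (snd (c k)) <= M.

(* Real coordinates of [c : C^n]: index [k] is [Re c_k], index [n + k] is [Im c_k]. *)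
Definition encode {n : nat} (c : Cn n) (i : nat) : R :=
  match (insub i : option 'I_n) with
  | Some k => fst (c k)
  | None => match (insub (i - n)%N : option 'I_n) with Some k => snd (c k) | None => 0 end
  end.
Definition decode {n : nat} (v : nat -> R) : Cn n := fun k => (v (nat_of_ord k), v (n + k)%nat).

Lemma encode_fst {n : nat} (c : Cn n) (k : 'I_n) : encode c k = fst (c k).
Proof. by rewrite /encode valK. Qed.

Lemma encode_snd {n : nat} (c : Cn n) (k : 'I_n) : encode c (n + k)%nat = snd (c k).
Proof. by rewrite /encode insubF ?addKn ?valK // ltnNge leq_addr. Qed.

Lemma encode_cube {n : nat} {M : R} {c : Cn n} : Cbox M c -> in_cube (2 * n) M (encode c).
Proof.
  move=> Hc i Hi. rewrite /encode.
  case: insubP => [k _ _|Hn]; first by apply Hc.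
  case: insubP => [k _ _|Hn2]; first by apply Hc.
  exfalso. move: Hn Hn2; rewrite -!leqNgt => /leP h1 /leP h2. lia.
Qed.

Lemma box_cover {n : nat} M (r : Cn n -> R) : (forall p, 0 < r p) ->
  exists l : list (Cn n), forall c, Cbox M c -> exists p, In p l /\ near (r p) p c.
Proof.
  move=> Hr. have [l Hl] := cube_cover (2 * n) M (fun v => r (decode v)) (fun v => Hr (decode v)).
  exists (map decode l) => c Hc.
  have [v [Hv1 Hv2]] := Hl (encode c) (encode_cube Hc).
  exists (decode v). split; first exact: in_map.
  move=> k. split.
  - rewrite -encode_fst. apply: Hv2. apply/ltP. by rewrite mul2n -addnn ltn_addr.
  - rewrite -encode_snd. apply: Hv2. apply/ltP. by rewrite mul2n -addnn ltn_add2l.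
Qed.

(** * Local properties become uniform on boxes *)

Definition dist_le {n : nat} (b c : Cn n) (d : R) : Prop :=
  forall k, Rabs (fst (b k) - fst (c k)) <= d /\ Rabs (snd (b k) - snd (c k)) <= d.

Definition loc_lipschitz_R {n : nat} (g : Cn n -> R) : Prop :=
  forall p, exists r L, 0 < r /\ forall b c, near r p b -> near r p c ->
    forall d, dist_le b c d -> Rabs (g b - g c) <= L * d.

Definition box_lipschitz {n : nat} (g : Cn n -> R) : Prop :=
  forall M, exists L, 0 <= L /\ forall b c, Cbox M b -> Cbox M c ->
    forall d, 0 <= d -> dist_le b c d -> Rabs (g b - g c) <= L * d.

Lemma near_refl {n : nat} {r : R} (p : Cn n) : 0 < r -> near r p p.
Proof. move=> r0 k. rewrite !Rminus_diag Rabs_R0. by split. Qed.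

Lemma near_trans {n : nat} {r1 r2 : R} {p b c : Cn n} : near r1 p b -> near r2 b c -> near (r1 + r2) p c.
Proof.
  move=> h1 h2 k. have [a1 a2] := h1 k. have [b1 b2] := h2 k. split.
  - have := Rabs_triang (fst (b k) - fst (p k)) (fst (c k) - fst (b k)).
    have -> : fst (b k) - fst (p k) + (fst (c k) - fst (b k)) = fst (c k) - fst (p k) by ring. lra.
  - have := Rabs_triang (snd (b k) - snd (p k)) (snd (c k) - snd (b k)).
    have -> : snd (b k) - snd (p k) + (snd (c k) - snd (b k)) = snd (c k) - snd (p k) by ring. lra.
Qed.

Lemma near_mono {n : nat} {r1 r2 : R} {p c : Cn n} : r1 <= r2 -> near r1 p c -> near r2 p c.
Proof. move=> h h1 k. have [a1 a2] := h1 k. split; lra. Qed.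

Lemma near_dist_le {n : nat} {r : R} {b c : Cn n} : near r b c -> dist_le c b r.
Proof. move=> H k. have [h1 h2] := H k. split; lra. Qed.

Lemma near_box {n : nat} {M r : R} {a b : Cn n} : Cbox M a -> near r a b -> Cbox (M + r) b.
Proof.
  move=> Ha H k. have [h1 h2] := Ha k. have [n1 n2] := H k. split.
  - have := Rabs_triang (fst (b k) - fst (a k)) (fst (a k)).
    have -> : fst (b k) - fst (a k) + fst (a k) = fst (b k) by ring. lra.
  - have := Rabs_triang (snd (b k) - snd (a k)) (snd (a k)).
    have -> : snd (b k) - snd (a k) + snd (a k) = snd (b k) by ring. lra.
Qed.

Lemma Cbox_mono {n : nat} {M1 M2 : R} {c : Cn n} : M1 <= M2 -> Cbox M1 c -> Cbox M2 c.
Proof. move=> h H k. have [a b] := H k. split; lra. Qed.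

Definition box_radius {n : nat} (a : Cn n) : R := fmax (fun k : 'I_n => Rabs (fst (a k)) + Rabs (snd (a k))).

Lemma box_radius_box {n : nat} (a : Cn n) : Cbox (box_radius a) a.
Proof.
  move=> k. have := fmax_ge (fun k : 'I_n => Rabs (fst (a k)) + Rabs (snd (a k))) k.
  have := Rabs_pos (fst (a k)). have := Rabs_pos (snd (a k)). rewrite /box_radius. split; lra.
Qed.

Lemma box_radius_ge0 {n : nat} (a : Cn n) : 0 <= box_radius a.
Proof. exact: fmax_ge0. Qed.

Lemma box_bounded {n : nat} M {g : Cn n -> R} :
  (forall p, exists r K, 0 < r /\ forall c, near r p c -> Rabs (g c) <= K) ->
  exists K, 0 <= K /\ forall c, Cbox M c -> Rabs (g c) <= K.
Proof.
  move=> H.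
  have /choice [rK HrK] : forall p, exists rK : R * R,
      0 < rK.1 /\ forall c, near rK.1 p c -> Rabs (g c) <= rK.2.
  { move=> p. have [r [K HK]] := H p. by exists (r, K). }
  have [l Hl] := box_cover M (fun p => (rK p).1) (fun p => proj1 (HrK p)).
  exists (max_list (map (fun p => (rK p).2) l)). split; first exact: max_list_ge0.
  move=> c Hc. have [p [Hp1 Hp2]] := Hl c Hc.
  apply: Rle_trans (proj2 (HrK p) c Hp2) _.
  apply: max_list_ge. exact: (in_map (fun p => (rK p).2)).
Qed.

Lemma cont_locally_bounded {n : nat} {g : Cn n -> R} : continuous_Cn g ->
  forall p, exists r K, 0 < r /\ forall c, near r p c -> Rabs (g c) <= K.
Proof.
  move=> H p. have [d [d0 Hd]] := H p 1 Rlt_0_1. exists d, (Rabs (g p) + 1). split => // c Hc.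
  have := Hd c Hc. have := Rabs_triang (g c - g p) (g p). have -> : g c - g p + g p = g c by ring. lra.
Qed.

Lemma box_uniform_continuity {n : nat} M {g : Cn n -> R} : continuous_Cn g ->
  forall eps, 0 < eps -> exists del, 0 < del /\
    forall b c, Cbox M b -> near del b c -> Rabs (g c - g b) < eps.
Proof.
  move=> Hg eps He.
  have /choice [d dP] : forall p, exists d,
      0 < d /\ forall b, near d p b -> Rabs (g b - g p) < eps / 2.
  { move=> p. apply: Hg. lra. }
  have rpos : forall p, 0 < d p / 2 by move=> p; have := proj1 (dP p); lra.
  have [l Hl] := box_cover M (fun p => d p / 2) rpos.
  exists (min_list (map (fun p => d p / 2) l)). split.
  { apply: min_list_pos => x /in_map_iff [p [<- _]]. exact: rpos. }
  move=> b c Hb Hbc. have [p [Hp1 Hp2]] := Hl b Hb.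
  have hm : min_list (map (fun p => d p / 2) l) <= d p / 2.
  { apply: min_list_le. exact: (in_map (fun p => d p / 2)). }
  have d0 := proj1 (dP p).
  have Hc : near (d p) p c by apply: near_mono (near_trans Hp2 Hbc); lra.
  have Hb' : near (d p) p b by apply: near_mono Hp2; lra.
  have := proj2 (dP p) c Hc. have := proj2 (dP p) b Hb'.
  have -> : g c - g b = (g c - g p) - (g b - g p) by ring.
  have := abs_sub_le (g c - g p) (g b - g p). lra.
Qed.

Lemma loc_lipschitz_locally_bounded {n : nat} {g : Cn n -> R} : loc_lipschitz_R g ->
  forall p, exists r K, 0 < r /\ forall c, near r p c -> Rabs (g c) <= K.
Proof.
  move=> H p. have [r [L [r0 HL]]] := H p.
  exists r, (Rabs (g p) + Rabs L * r). split => // c Hc.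
  have := HL c p Hc (near_refl p r0) r (near_dist_le Hc).
  have := Rabs_triang (g c - g p) (g p). have -> : g c - g p + g p = g c by ring.
  have : L * r <= Rabs L * r by apply: Rmult_le_compat_r; [lra | apply: Rle_abs].
  lra.
Qed.

(* Locally Lipschitz functions are Lipschitz on boxes: nearby pairs are handled by a
   finite cover, distant pairs by the bound on the box. *)
Lemma box_lipschitz_of_loc {n : nat} {g : Cn n -> R} : loc_lipschitz_R g -> box_lipschitz g.
Proof.
  move=> H M.
  have /choice [r rP] : forall p, exists r, 0 < r /\ exists L, forall b c, near r p b ->
      near r p c -> forall d, dist_le b c d -> Rabs (g b - g c) <= L * d.
  { move=> p. have [r [L [r0 HL]]] := H p. exists r. split => //. by exists L. }
  have /choice [L LP] : forall p, exists L, forall b c, near (r p) p b -> near (r p) p c ->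
      forall d, dist_le b c d -> Rabs (g b - g c) <= L * d.
  { move=> p. exact: proj2 (rP p). }
  have [K [K0 HK]] := box_bounded M (loc_lipschitz_locally_bounded H).
  have rpos : forall p, 0 < r p / 2 by move=> p; have := proj1 (rP p); lra.
  have [l Hl] := box_cover M (fun p => r p / 2) rpos.
  set del := min_list (map (fun p => r p / 2) l).
  have del0 : 0 < del by apply: min_list_pos => x /in_map_iff [p [<- _]]; apply: rpos.
  set Lmax := max_list (map L l).
  exists (Lmax + 2 * K / del). split.
  { have := max_list_ge0 (map L l).
    have : 0 <= 2 * K / del by apply: Rmult_le_pos; [lra | left; apply: Rinv_0_lt_compat].
    rewrite /Lmax. lra. }
  move=> b c Hb Hc d d0 Hd. rewrite Rmult_plus_distr_r.
  have e2 : 0 <= 2 * K / del * d.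
  { apply: Rmult_le_pos => //. apply: Rmult_le_pos; [lra | left; exact: Rinv_0_lt_compat]. }
  have e1 : 0 <= Lmax * d by apply: Rmult_le_pos => //; apply: max_list_ge0.
  case: (Rlt_dec d del) => hd.
  - have [p [Hp1 Hp2]] := Hl b Hb.
    have hm : del <= r p / 2 by apply: min_list_le; apply: (in_map (fun p => r p / 2)).
    have Hb' : near (r p) p b by apply: near_mono Hp2; lra.
    have Hc' : near (r p) p c.
    { apply: near_mono (near_trans Hp2 (_ : near del b c)); first lra.
      move=> k. have [b1 b2] := Hd k. rewrite Rabs_minus_sym (Rabs_minus_sym (snd _)). split; lra. }
    have := LP p b c Hb' Hc' d Hd.
    have : L p * d <= Lmax * d.
    { apply: Rmult_le_compat_r => //. apply: max_list_ge. exact: in_map. }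
    lra.
  - have := abs_sub_le (g b) (g c). have := HK b Hb. have := HK c Hc.
    have : 2 * K <= 2 * K / del * d.
    { have -> : 2 * K / del * d = 2 * K * (d / del) by field; lra.
      have : 1 <= d / del.
      { apply: (Rmult_le_reg_r del) => //. have -> : d / del * del = d by field; lra. lra. }
      nra. }
    lra.
Qed.

Lemma box_lipschitz_opp {n : nat} {g : Cn n -> R} : box_lipschitz g -> box_lipschitz (fun b => - g b).
Proof.
  move=> H M. have [L [L0 HL]] := H M. exists L. split => // b c Hb Hc d d0 Hd.
  have -> : - g b - - g c = - (g b - g c) by ring. rewrite Rabs_Ropp. exact: HL.
Qed.

Lemma continuous_of_box_lipschitz {n : nat} (G : Cn n -> R) : box_lipschitz G -> continuous_Cn G.
Proof.
  move=> HL a eps he. have [L [L0 H]] := HL (box_radius a + 1).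
  set del := Rmin 1 (eps / (L + 1)).
  have hdel : 0 < eps / (L + 1) by apply: Rdiv_lt_0_compat; lra.
  exists del. split; first by apply: Rmin_glb_lt; lra.
  move=> b Hb.
  have Bb : Cbox (box_radius a + 1) b.
  { apply: Cbox_mono (near_box (box_radius_box a) Hb). apply: Rplus_le_compat_l. exact: Rmin_l. }
  have Ba : Cbox (box_radius a + 1) a by apply: Cbox_mono (box_radius_box a); lra.
  have dpos : 0 <= del by apply: Rmin_glb; lra.
  apply: Rle_lt_trans (H b a Bb Ba _ dpos (near_dist_le Hb)) _.
  have : L * del <= L * (eps / (L + 1)) by apply: Rmult_le_compat_l => //; apply: Rmin_r.
  have : L * (eps / (L + 1)) = eps - eps / (L + 1) by field; lra.
  lra.
Qed.

(** * Functions with continuous partial derivatives *)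

Lemma upd_upd {n : nat} (c : Cn n) j v w : upd (upd c j v) j w = upd c j w.
Proof. apply: functional_extensionality => k. rewrite /upd. by case: (k == j). Qed.

Lemma upd_at {n : nat} (c : Cn n) j v : upd c j v j = v.
Proof. by rewrite /upd eqxx. Qed.

Lemma upd_same {n : nat} (c : Cn n) j : upd c j (c j) = c.
Proof. apply: functional_extensionality => k. rewrite /upd. by case: eqP => [->|]. Qed.

Lemma upd_near {n : nat} (b : Cn n) j p q r : 0 < r ->
  Rabs (p - fst (b j)) < r -> Rabs (q - snd (b j)) < r -> near r b (upd b j (p, q)).
Proof.
  move=> r0 h1 h2 k. rewrite /upd. case: eqP => [->|_] //=.
  rewrite !Rminus_diag Rabs_R0. by split.
Qed.

Lemma between_dist {s u v : R} : Rmin u v <= s <= Rmax u v -> Rabs (s - u) <= Rabs (v - u).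
Proof. rewrite /Rmin /Rmax /Rabs. repeat case: Rle_dec; repeat case: Rcase_abs; lra. Qed.

Lemma between_abs {s u v M : R} : Rmin u v <= s <= Rmax u v -> Rabs u <= M -> Rabs v <= M -> Rabs s <= M.
Proof. rewrite /Rmin /Rmax /Rabs. repeat case: Rle_dec; repeat case: Rcase_abs; lra. Qed.

Section Partials.
Variable n : nat.
Variable h : Cn n -> R.
Variables hx hy : 'I_n -> Cn n -> R.
Hypothesis hp : partials h hx hy.

Lemma mvt_x c j y u v : exists s, Rmin u v <= s <= Rmax u v /\
  h (upd c j (v, y)) - h (upd c j (u, y)) = hx j (upd c j (s, y)) * (v - u).
Proof.
  have D s : derivable_pt_lim (fun s => h (upd c j (s, y))) s (hx j (upd c j (s, y))).
  { have := proj1 (hp (upd c j (s, y)) j). rewrite /pd_x upd_at /=.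
    have -> // : (fun s0 => h (upd (upd c j (s, y)) j (s0, y))) = (fun s0 => h (upd c j (s0, y))).
    by apply: functional_extensionality => ?; rewrite upd_upd. }
  have [s [hs E]] := MVT_gen (fun s => h (upd c j (s, y))) u v (fun s => hx j (upd c j (s, y)))
    (fun x _ => proj2 (is_derive_Reals _ _ _) (D x))
    (fun x _ => derivable_continuous_pt _ x (exist _ _ (D x))).
  by exists s.
Qed.

Lemma mvt_y c j x u v : exists s, Rmin u v <= s <= Rmax u v /\
  h (upd c j (x, v)) - h (upd c j (x, u)) = hy j (upd c j (x, s)) * (v - u).
Proof.
  have D s : derivable_pt_lim (fun s => h (upd c j (x, s))) s (hy j (upd c j (x, s))).
  { have := proj2 (hp (upd c j (x, s)) j). rewrite /pd_y upd_at /=.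
    have -> // : (fun s0 => h (upd (upd c j (x, s)) j (x, s0))) = (fun s0 => h (upd c j (x, s0))).
    by apply: functional_extensionality => ?; rewrite upd_upd. }
  have [s [hs E]] := MVT_gen (fun s => h (upd c j (x, s))) u v (fun s => hy j (upd c j (x, s)))
    (fun x _ => proj2 (is_derive_Reals _ _ _) (D x))
    (fun x _ => derivable_continuous_pt _ x (exist _ _ (D x))).
  by exists s.
Qed.

Lemma one_coord_lipschitz {M K : R} {j : 'I_n} {c : Cn n} {x' y' d : R} :
  (forall b, Cbox M b -> Rabs (hx j b) <= K /\ Rabs (hy j b) <= K) ->
  Cbox M c -> Cbox M (upd c j (x', y')) ->
  Rabs (x' - fst (c j)) <= d -> Rabs (y' - snd (c j)) <= d ->
  Rabs (h (upd c j (x', y')) - h c) <= 2 * K * d.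
Proof.
  move=> HK Hc Hc' dx dy.
  have [bx' by'] := Hc' j. rewrite upd_at /= in bx' by'. have [bx0 by0] := Hc j.
  have inbox u v : Rabs u <= M -> Rabs v <= M -> Cbox M (upd c j (u, v)).
  { move=> hu hv k. rewrite /upd. by case: eqP => _; [split | apply: Hc]. }
  have [s1 [hs1 E1]] := mvt_y c j x' (snd (c j)) y'.
  have [s2 [hs2 E2]] := mvt_x c j (snd (c j)) (fst (c j)) x'.
  have [_ K1] := HK _ (inbox x' s1 bx' (between_abs hs1 by0 by')).
  have [K2 _] := HK _ (inbox s2 (snd (c j)) (between_abs hs2 bx0 bx') by0).
  have e0 : upd c j (fst (c j), snd (c j)) = c by rewrite -surjective_pairing upd_same.
  rewrite e0 in E2.
  have -> : h (upd c j (x', y')) - h c = (h (upd c j (x', y')) - h (upd c j (x', snd (c j))))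
    + (h (upd c j (x', snd (c j))) - h c) by ring.
  rewrite E1 E2. apply: Rle_trans (Rabs_triang _ _) _. rewrite !Rabs_mult.
  have := Rmult_le_compat _ _ _ _ (Rabs_pos _) (Rabs_pos _) K1 dy.
  have := Rmult_le_compat _ _ _ _ (Rabs_pos _) (Rabs_pos _) K2 dx. lra.
Qed.

Definition mix (k : nat) (b c : Cn n) : Cn n := fun i => if (i < k)%N then b i else c i.

(* Bounded partials on a box give a Lipschitz bound there, by changing the
   coordinates one at a time. *)
Lemma box_lipschitz_of_bounded_partials M K :
  (forall j b, Cbox M b -> Rabs (hx j b) <= K /\ Rabs (hy j b) <= K) ->
  forall b c, Cbox M b -> Cbox M c -> forall d, 0 <= d -> dist_le b c d ->
    Rabs (h b - h c) <= 2 * INR n * K * d.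
Proof.
  move=> HK b c Hb Hc d d0 Hd.
  have mix_box k : Cbox M (mix k b c) by move=> i; rewrite /mix; case: (i < k)%N.
  suff : forall k, (k <= n)%N -> Rabs (h (mix k b c) - h c) <= 2 * INR k * K * d.
  { move=> /(_ n (leqnn n)). suff -> : mix n b c = b by [].
    apply: functional_extensionality => i. by rewrite /mix ltn_ord. }
  elim=> [|k IH] hk.
  - have -> : mix 0 b c = c by apply: functional_extensionality.
    rewrite Rminus_diag Rabs_R0 /=. nra.
  - set kk : 'I_n := Ordinal hk.
    have ekk : mix k.+1 b c = upd (mix k b c) kk (fst (b kk), snd (b kk)).
    { apply: functional_extensionality => i. rewrite /mix /upd -surjective_pairing.
      case: eqP => [->|ne]; first by rewrite ltnSn.
      rewrite ltnS leq_eqVlt. suff -> : (nat_of_ord i == k) = false by [].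
      apply/eqP => e. apply: ne. exact: val_inj. }
    have ck : mix k b c kk = c kk by rewrite /mix ltnn.
    have [dx dy] := Hd kk.
    have bk1 := mix_box k.+1. rewrite ekk in bk1.
    rewrite -ck in dx dy.
    have := one_coord_lipschitz (HK kk) (mix_box k) bk1 dx dy.
    rewrite -ekk. have := IH (ltnW hk).
    have := Rabs_triang (h (mix k.+1 b c) - h (mix k b c)) (h (mix k b c) - h c).
    have -> : h (mix k.+1 b c) - h (mix k b c) + (h (mix k b c) - h c) = h (mix k.+1 b c) - h c by ring.
    rewrite S_INR. lra.
Qed.

Lemma linearization_estimate (b : Cn n) j p q s eps del : 0 < del ->
  (forall c, near del b c -> Rabs (hx j c - hx j b) < eps /\ Rabs (hy j c - hy j b) < eps) ->
  Rabs (s * p) < del -> Rabs (s * q) < del ->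
  Rabs (h (upd b j (fst (b j) + s * p, snd (b j) + s * q)) - h b - (s * p * hx j b + s * q * hy j b))
    <= Rabs (s * p) * eps + Rabs (s * q) * eps.
Proof.
  move=> d0 U hp1 hq1.
  set X := fst (b j). set Y := snd (b j).
  have [u1 [hu1 E1]] := mvt_x b j Y X (X + s * p).
  have [u2 [hu2 E2]] := mvt_y b j (X + s * p) Y (Y + s * q).
  have eb : upd b j (X, Y) = b by rewrite /X /Y -surjective_pairing upd_same.
  rewrite eb in E1.
  have shift z w : z + w - z = w by ring.
  have n1 : near del b (upd b j (u1, Y)).
  { apply: upd_near => //; rewrite -/X -/Y.
    - have := between_dist hu1. rewrite shift. lra.
    - rewrite Rminus_diag Rabs_R0. lra. }
  have n2 : near del b (upd b j (X + s * p, u2)).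
  { apply: upd_near => //; rewrite -/X -/Y; first by rewrite shift.
    have := between_dist hu2. rewrite shift. lra. }
  have [a1 _] := U _ n1. have [_ a2] := U _ n2.
  have -> : h (upd b j (X + s * p, Y + s * q)) - h b - (s * p * hx j b + s * q * hy j b)
    = (h (upd b j (X + s * p, Y + s * q)) - h (upd b j (X + s * p, Y))) + (h (upd b j (X + s * p, Y)) - h b)
      - (s * p * hx j b + s * q * hy j b) by ring.
  rewrite E1 E2 !shift.
  have -> : hy j (upd b j (X + s * p, u2)) * (s * q) + hx j (upd b j (u1, Y)) * (s * p) -
    (s * p * hx j b + s * q * hy j b) = (s * q) * (hy j (upd b j (X + s * p, u2)) - hy j b)
      + (s * p) * (hx j (upd b j (u1, Y)) - hx j b) by ring.
  apply: Rle_trans (Rabs_triang _ _) _. rewrite (Rabs_mult (s * q)) (Rabs_mult (s * p)).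
  have := Rmult_le_compat_l (Rabs (s * q)) _ _ (Rabs_pos _) (Rlt_le _ _ a2).
  have := Rmult_le_compat_l (Rabs (s * p)) _ _ (Rabs_pos _) (Rlt_le _ _ a1). lra.
Qed.

Hypothesis hxc : forall j, continuous_Cn (hx j).
Hypothesis hyc : forall j, continuous_Cn (hy j).

Lemma partials_box_bounded M : exists K, forall j c, Cbox M c ->
  Rabs (hx j c) <= K /\ Rabs (hy j c) <= K.
Proof.
  have /choice [Kf HKf] : forall j, exists K, forall c, Cbox M c ->
      Rabs (hx j c) <= K /\ Rabs (hy j c) <= K.
  { move=> j. have [K1 [_ H1]] := box_bounded M (cont_locally_bounded (hxc j)).
    have [K2 [_ H2]] := box_bounded M (cont_locally_bounded (hyc j)).
    exists (Rmax K1 K2) => c Hc. have := H1 c Hc. have := H2 c Hc.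
    have := Rmax_l K1 K2. have := Rmax_r K1 K2. lra. }
  exists (fmax Kf) => j c Hc. have := HKf j c Hc. have := fmax_ge Kf j. lra.
Qed.

Lemma C1_box_lipschitz : box_lipschitz h.
Proof.
  move=> M. have [K HK] := partials_box_bounded M.
  exists (2 * INR n * Rmax 0 K). split; first by have := pos_INR n; have := Rmax_l 0 K; nra.
  apply: box_lipschitz_of_bounded_partials => j b Hb.
  have := HK j b Hb. have := Rmax_r 0 K. lra.
Qed.

End Partials.

Arguments linearization_estimate {n h hx hy}.
Arguments C1_box_lipschitz {n h hx hy}.

(** * Almost periods of a linear flow on the torus (Dirichlet/Kronecker)

  The proof
  partitions the circle into [Q+1] arcs and applies the pigeonhole principle to
  the arc patterns of the times [0, A, 2A, ...]. *)

Definition near_2piZ (d u : R) : Prop := exists m : Z, Rabs (u - 2 * PI * IZR m) < d.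

Lemma near_2piZ_add {d1 d2 x y : R} : near_2piZ d1 x -> near_2piZ d2 y -> near_2piZ (d1 + d2) (x + y).
Proof.
  move=> [m1 h1] [m2 h2]. exists (m1 + m2)%Z. rewrite plus_IZR.
  have := Rabs_triang (x - 2 * PI * IZR m1) (y - 2 * PI * IZR m2).
  have -> : x - 2 * PI * IZR m1 + (y - 2 * PI * IZR m2) = x + y - 2 * PI * (IZR m1 + IZR m2) by ring.
  lra.
Qed.

Lemma near_2piZ_opp {d x : R} : near_2piZ d x -> near_2piZ d (- x).
Proof.
  move=> [m h]. exists (- m)%Z. rewrite opp_IZR.
  have -> : - x - 2 * PI * - IZR m = - (x - 2 * PI * IZR m) by ring. by rewrite Rabs_Ropp.
Qed.

Lemma near_2piZ_mono {d1 d2 x : R} : d1 <= d2 -> near_2piZ d1 x -> near_2piZ d2 x.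
Proof. move=> h [m hm]. exists m. lra. Qed.

Lemma near_2piZ_0 d : 0 < d -> near_2piZ d 0.
Proof. move=> h. exists 0%Z. rewrite Rmult_0_r Rminus_0_r Rabs_R0. lra. Qed.

Lemma cos_sin_2piZ x m : cos (x + 2 * PI * IZR m) = cos x /\ sin (x + 2 * PI * IZR m) = sin x.
Proof.
  case: (Z_le_gt_dec 0 m) => hm.
  - rewrite -(Z2Nat.id m) // -INR_IZR_INZ.
    have -> : x + 2 * PI * INR (Z.to_nat m) = x + 2 * INR (Z.to_nat m) * PI by ring.
    by rewrite cos_period sin_period.
  - have e : IZR m = - INR (Z.to_nat (- m)) by rewrite INR_IZR_INZ Z2Nat.id ?opp_IZR; [ring | lia].
    rewrite e. set y := x + 2 * PI * - INR (Z.to_nat (- m)).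
    have -> : x = y + 2 * INR (Z.to_nat (- m)) * PI by rewrite /y; ring.
    by rewrite cos_period sin_period.
Qed.

Lemma cos_lipschitz x y : Rabs (cos x - cos y) <= Rabs (x - y).
Proof.
  have [c [E _]] := MVT_abs cos (fun c => - sin c) y x (fun c _ => derivable_pt_lim_cos c).
  rewrite E Rabs_Ropp. have := Rabs_pos (x - y). have := SIN_bound c.
  have : Rabs (sin c) <= 1 by rewrite /Rabs; case: Rcase_abs; have := SIN_bound c; lra.
  nra.
Qed.

Lemma sin_lipschitz x y : Rabs (sin x - sin y) <= Rabs (x - y).
Proof.
  have [c [E _]] := MVT_abs sin cos y x (fun c _ => derivable_pt_lim_sin c).
  rewrite E. have := Rabs_pos (x - y).
  have : Rabs (cos c) <= 1 by rewrite /Rabs; case: Rcase_abs; have := COS_bound c; lra.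
  nra.
Qed.

Lemma trig_close {d u v : R} : near_2piZ d (u - v) -> Rabs (cos u - cos v) < d /\ Rabs (sin u - sin v) < d.
Proof.
  move=> [m hm]. set e := u - v - 2 * PI * IZR m.
  have -> : u = (v + e) + 2 * PI * IZR m by rewrite /e; ring.
  have [-> ->] := cos_sin_2piZ (v + e) m.
  have := cos_lipschitz (v + e) v. have := sin_lipschitz (v + e) v.
  have -> : v + e - v = e by ring. rewrite /e in hm |- *. lra.
Qed.

Lemma cos_sin_bound x : Rabs (cos x) <= 1 /\ Rabs (sin x) <= 1.
Proof.
  have := COS_bound x. have := SIN_bound x.
  move=> [? ?] [? ?]. split; rewrite /Rabs; case: Rcase_abs; lra.
Qed.

Definition frac_part (y : R) : R := y - IZR (Int_part y).

Lemma frac_part_bound y : 0 <= frac_part y < 1.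
Proof. have [h1 h2] := base_Int_part y. rewrite /frac_part. lra. Qed.

Section Arcs.
Variable Q : nat.

(* The index of the arc of length [2 pi / (Q+1)] containing the angle [u]. *)
Definition arc_index (u : R) : 'I_Q.+1 :=
  inord (Z.to_nat (Int_part (INR Q.+1 * frac_part (u / (2 * PI))))).

Lemma arc_index_val u : IZR (Int_part (INR Q.+1 * frac_part (u / (2 * PI)))) = INR (arc_index u).
Proof.
  have [f0 f1] := frac_part_bound (u / (2 * PI)).
  have Q0 : 0 < INR Q.+1 by apply: lt_0_INR; lia.
  set y := INR Q.+1 * frac_part (u / (2 * PI)).
  have y0 : 0 <= y < INR Q.+1 by split; rewrite /y; nra.
  have [h1 h2] := base_Int_part y.
  have i0 : (-1 < Int_part y)%Z by apply: lt_IZR; simpl; lra.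
  have i1 : (Int_part y < Z.of_nat Q.+1)%Z by apply: lt_IZR; rewrite -INR_IZR_INZ; lra.
  rewrite /arc_index -/y inordK; last by apply/ltP; lia.
  rewrite INR_IZR_INZ Z2Nat.id //. lia.
Qed.

Lemma same_arc_close u1 u2 : arc_index u1 = arc_index u2 -> near_2piZ (2 * PI / INR Q.+1) (u1 - u2).
Proof.
  move=> E.
  have e := arc_index_val u1. rewrite E -(arc_index_val u2) in e.
  have Q0 : 0 < INR Q.+1 by apply: lt_0_INR; lia.
  have P0 := PI_RGT_0.
  set y1 := INR Q.+1 * frac_part (u1 / (2 * PI)) in e.
  set y2 := INR Q.+1 * frac_part (u2 / (2 * PI)) in e.
  have [a1 a2] := base_Int_part y1. have [b1 b2] := base_Int_part y2.
  have hy : Rabs (y1 - y2) < 1 by apply: Rabs_def1; lra.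
  exists (Int_part (u1 / (2 * PI)) - Int_part (u2 / (2 * PI)))%Z.
  rewrite minus_IZR.
  have -> : u1 - u2 - 2 * PI * (IZR (Int_part (u1 / (2 * PI))) - IZR (Int_part (u2 / (2 * PI))))
    = 2 * PI / INR Q.+1 * (y1 - y2) by rewrite /y1 /y2 /frac_part; field; lra.
  have p : 0 < 2 * PI / INR Q.+1 by apply: Rdiv_lt_0_compat; lra.
  rewrite Rabs_mult Rabs_right; [nra | lra].
Qed.

Variable n : nat.
Variable Lam : 'I_n -> R.

Definition arc_pattern (t : R) : {ffun 'I_n -> 'I_Q.+1} := [ffun j => arc_index (Lam j * t)].

Let e := 2 * PI / INR Q.+1.

Lemma arc_pattern_close {t1 t2 : R} : arc_pattern t1 = arc_pattern t2 ->
  forall j, near_2piZ e (Lam j * t1 - Lam j * t2).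
Proof.
  move=> E j. apply: same_arc_close.
  have := congr1 (fun f : {ffun 'I_n -> 'I_Q.+1} => f j) E. by rewrite /= !ffunE.
Qed.

(* Among the [N+1] times [0, A, ..., N A] (N the number of patterns) two share a
   pattern, so some positive multiple of [A] is an [e]-almost period. *)
Lemma pigeonhole_return A : exists q : nat, (1 <= q)%N /\ forall j, near_2piZ e (Lam j * (INR q * A)).
Proof.
  set N := #|{ffun 'I_n -> 'I_Q.+1}|.
  set f := fun i : 'I_N.+1 => arc_pattern (INR i * A).
  have [i [k [E ne]]] : exists i k, f i = f k /\ i <> k.
  { apply: NNPP => H. have inj : injective f.
    { move=> x y Exy. apply: NNPP => nxy. apply: H. by exists x, y. }
    have := leq_card f inj. by rewrite card_ord ltnn. }
  have ne' : nat_of_ord i <> nat_of_ord k by move=> h; apply: ne; apply: val_inj.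
  have [lt|lt] : (i < k)%coq_nat \/ (k < i)%coq_nat by lia.
  - exists (k - i)%N. split; first by apply/leP; lia.
    move=> j. have := arc_pattern_close (esym E) j.
    rewrite minus_INR; last by lia.
    by have -> : Lam j * ((INR k - INR i) * A) = Lam j * (INR k * A) - Lam j * (INR i * A) by ring.
  - exists (i - k)%N. split; first by apply/leP; lia.
    move=> j. have := arc_pattern_close E j.
    rewrite minus_INR; last by lia.
    by have -> : Lam j * ((INR i - INR k) * A) = Lam j * (INR i * A) - Lam j * (INR k * A) by ring.
Qed.

Lemma return_after a : exists t, 0 <= t /\ forall j, near_2piZ e (Lam j * t - Lam j * a).
Proof.
  have e0 : 0 < e by apply: Rdiv_lt_0_compat; [have := PI_RGT_0; lra | apply: lt_0_INR; lia].
  case: (Rle_dec 0 a) => ha.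
  - exists a. split => // j. rewrite Rminus_diag. exact: near_2piZ_0.
  - have [q [hq Hq]] := pigeonhole_return (- a).
    exists ((INR q - 1) * - a). split.
    + have : 1 <= INR q by apply: (le_INR 1); apply/leP. nra.
    + move=> j. have -> : Lam j * ((INR q - 1) * - a) - Lam j * a = Lam j * (INR q * - a) by ring.
      exact: Hq.
Qed.

(* One return time per pattern gives a uniform bound [K] on the gap. *)
Lemma returns_dense_arcs : exists L, 0 < L /\ forall s, exists tau, s <= tau <= s + L /\
  forall j, near_2piZ (2 * e) (Lam j * tau).
Proof.
  have /choice [Tf TfP] : forall b : {ffun 'I_n -> 'I_Q.+1}, exists t, 0 <= t /\
      forall a, arc_pattern a = b -> forall j, near_2piZ (2 * e) (Lam j * t - Lam j * a).
  { move=> b. case: (classic (exists a0, arc_pattern a0 = b)) => [[a0 Ha0]|na].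
    - have [t [t0 Ht]] := return_after a0. exists t. split => // a Ha j.
      have -> : Lam j * t - Lam j * a = (Lam j * t - Lam j * a0) + (Lam j * a0 - Lam j * a) by ring.
      have -> : 2 * e = e + e by ring.
      apply: near_2piZ_add; first exact: Ht.
      apply: arc_pattern_close. by rewrite Ha0 Ha.
    - exists 0. split; first lra. move=> a Ha. exfalso. apply: na. by exists a. }
  set K := fmax Tf.
  exists (K + 1). split; first by have := fmax_ge0 Tf; rewrite -/K; lra.
  move=> s. set a := s + K. set t := Tf (arc_pattern a).
  have [t0 Ht] := TfP (arc_pattern a). rewrite -/t in t0 Ht.
  have tK : t <= K := fmax_ge Tf (arc_pattern a).
  exists (a - t). split; first by rewrite /a; lra.
  move=> j. have := near_2piZ_opp (Ht a erefl j).
  by have -> : - (Lam j * t - Lam j * a) = Lam j * (a - t) by ring.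
Qed.

End Arcs.

Theorem returns_relatively_dense n (Lam : 'I_n -> R) d : 0 < d -> exists L, 0 < L /\
  forall s, exists tau, s <= tau <= s + L /\ forall j, near_2piZ d (Lam j * tau).
Proof.
  move=> hd. have P0 := PI_RGT_0.
  have [Q HQ] := nat_unbounded (4 * PI / d).
  have Q1 : 0 < INR Q.+1 by apply: lt_0_INR; lia.
  have [L [L0 HL]] := returns_dense_arcs Q n Lam.
  exists L. split => // s. have [tau [h1 h2]] := HL s. exists tau. split => // j.
  apply: near_2piZ_mono (h2 j).
  have -> : 2 * (2 * PI / INR Q.+1) = 4 * PI / INR Q.+1 by field; lra.
  apply: (Rmult_le_reg_r (INR Q.+1)) => //.
  have -> : 4 * PI / INR Q.+1 * INR Q.+1 = 4 * PI by field; lra.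
  have : 4 * PI <= d * INR Q.
  { have := Rmult_le_compat_l d _ _ (Rlt_le _ _ hd) HQ.
    by have -> : d * (4 * PI / d) = 4 * PI by field; lra. }
  rewrite S_INR. nra.
Qed.

(** * Bohr's mean value theorem

  Averages over windows
  of length [T] barely depend on the window's position; cutting [[0, S]] into
  windows of length [T] shows that the averages form a Cauchy family. *)

Definition almost_periodic (g : R -> R) : Prop :=
  forall eps, 0 < eps -> exists L, 0 < L /\
    forall s, exists tau, s <= tau <= s + L /\ forall t, Rabs (g (t + tau) - g t) <= eps.

Lemma exists_floor_multiple S T : 0 < T -> 0 <= S -> exists k : nat, INR k * T <= S < INR k * T + T.
Proof.
  move=> HT HS. have [h1 h2] := base_Int_part (S / T).
  have h0 : (0 <= Int_part (S / T))%Z.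
  { have q0 : 0 <= S / T by apply: Rmult_le_pos => //; left; apply: Rinv_0_lt_compat.
    have : (-1 < Int_part (S / T))%Z by apply: lt_IZR; simpl; lra. lia. }
  exists (Z.to_nat (Int_part (S / T))). rewrite INR_IZR_INZ Z2Nat.id //.
  have eST : S / T * T = S by field; lra.
  have := Rmult_le_compat_r T _ _ (Rlt_le _ _ HT) h1. rewrite eST => l1.
  have := Rmult_lt_compat_r T (S / T) (IZR (Int_part (S / T)) + 1) HT ltac:(lra).
  rewrite eST. lra.
Qed.

Section BohrMean.
Variable g : R -> R.
Hypothesis g_cont : forall t, continuous g t.
Variable B : R.
Hypothesis g_bound : forall t, Rabs (g t) <= B.

Lemma B_ge0 : 0 <= B.
Proof. have := g_bound 0. have := Rabs_pos (g 0). lra. Qed.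

Lemma g_integrable a b : ex_RInt g a b.
Proof. apply: (@ex_RInt_continuous R_CompleteNormedModule) => *. exact: g_cont. Qed.

Lemma int_chasles a b c : RInt g a b + RInt g b c = RInt g a c.
Proof. apply: (RInt_Chasles g a b c); exact: g_integrable. Qed.

Lemma int_bound a b : a <= b -> Rabs (RInt g a b) <= (b - a) * B.
Proof. move=> hab. apply: abs_RInt_le_const => //; exact: g_integrable. Qed.

Lemma window_shift_estimate eps L s T tau : 0 <= T -> s <= tau <= s + L ->
  (forall t, Rabs (g (t + tau) - g t) <= eps) ->
  Rabs (RInt g s (s + T) - RInt g 0 T) <= eps * T + 2 * L * B.
Proof.
  move=> HT Htau Hg.
  have shifted : RInt g tau (tau + T) = RInt (fun t => g (t + tau)) 0 T.
  { have := RInt_comp_lin g 1 tau 0 T.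
    have -> : 1 * 0 + tau = tau by ring. have -> : 1 * T + tau = tau + T by ring.
    move=> <-; last exact: g_integrable.
    apply: RInt_ext => x _. change (1 * g (1 * x + tau) = g (x + tau)).
    rewrite !Rmult_1_l. by rewrite Rplus_comm. }
  have ex_sh : ex_RInt (fun t => g (t + tau)) 0 T.
  { apply: (@ex_RInt_continuous R_CompleteNormedModule) => z _.
    apply: continuous_comp; last exact: g_cont.
    apply: continuous_plus; [exact: continuous_id | exact: continuous_const]. }
  have core : Rabs (RInt g tau (tau + T) - RInt g 0 T) <= T * eps.
  { rewrite shifted.
    have := RInt_minus _ _ _ _ ex_sh (g_integrable 0 T).
    change (minus (RInt (fun t => g (t + tau)) 0 T) (RInt g 0 T)) with
      (RInt (fun t => g (t + tau)) 0 T - RInt g 0 T) => <-.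
    rewrite -[T in T * eps]Rminus_0_r.
    apply: abs_RInt_le_const => //; first exact: ex_RInt_minus ex_sh (g_integrable 0 T). }
  have e1 := int_chasles s tau (tau + T). have e2 := int_chasles s (s + T) (tau + T).
  have e3 := int_bound s tau ltac:(lra). have e4 := int_bound (s + T) (tau + T) ltac:(lra).
  have b1 : (tau - s) * B <= L * B by apply: Rmult_le_compat_r B_ge0 _; lra.
  have b2 : (tau + T - (s + T)) * B <= L * B by apply: Rmult_le_compat_r B_ge0 _; lra.
  have -> : RInt g s (s + T) - RInt g 0 T = RInt g s tau + (RInt g tau (tau + T) - RInt g 0 T)
    - RInt g (s + T) (tau + T) by lra.
  have := abs_sub_le (RInt g s tau + (RInt g tau (tau + T) - RInt g 0 T)) (RInt g (s + T) (tau + T)).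
  have := Rabs_triang (RInt g s tau) (RInt g tau (tau + T) - RInt g 0 T).
  lra.
Qed.

Hypothesis g_ap : almost_periodic g.

Lemma block_estimate eps L T : 0 < T ->
  (forall s, exists tau, s <= tau <= s + L /\ forall t, Rabs (g (t + tau) - g t) <= eps) ->
  forall k : nat, Rabs (RInt g 0 (INR k * T) - INR k * RInt g 0 T) <= INR k * (eps * T + 2 * L * B).
Proof.
  move=> HT AP. elim=> [|k IH].
  - rewrite /= !Rmult_0_l RInt_point. change (zero : R) with 0. rewrite Rminus_0_r Rabs_R0. lra.
  - have [tau [Ht Hg]] := AP (INR k * T).
    have W := window_shift_estimate eps L (INR k * T) T tau (Rlt_le _ _ HT) Ht Hg.
    rewrite S_INR -(int_chasles 0 (INR k * T) ((INR k + 1) * T)).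
    have -> : (INR k + 1) * T = INR k * T + T by ring.
    have := Rabs_triang (RInt g 0 (INR k * T) - INR k * RInt g 0 T)
      (RInt g (INR k * T) (INR k * T + T) - RInt g 0 T).
    have -> : RInt g 0 (INR k * T) - INR k * RInt g 0 T + (RInt g (INR k * T) (INR k * T + T) - RInt g 0 T)
      = RInt g 0 (INR k * T) + RInt g (INR k * T) (INR k * T + T) - (INR k + 1) * RInt g 0 T by ring.
    lra.
Qed.

Definition window_mean s T := RInt g s (s + T) / T.

Lemma mean_compare eps L T S : 0 < T -> T <= S ->
  (forall s, exists tau, s <= tau <= s + L /\ forall t, Rabs (g (t + tau) - g t) <= eps) ->
  Rabs (window_mean 0 S - window_mean 0 T) <= eps + 2 * L * B / T + 2 * B * T / S.
Proof.
  move=> HT HS AP. have B0 := B_ge0.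
  have [k [Hk1 Hk2]] := exists_floor_multiple S T HT ltac:(lra).
  have k0 := pos_INR k.
  have kc : Rabs (RInt g 0 S - INR k * RInt g 0 T) <= INR k * (eps * T + 2 * L * B) + B * T.
  { have := block_estimate eps L T HT AP k.
    have := int_chasles 0 (INR k * T) S. have := int_bound (INR k * T) S ltac:(lra).
    have := Rabs_triang (RInt g (INR k * T) S) (RInt g 0 (INR k * T) - INR k * RInt g 0 T).
    have : (S - INR k * T) * B <= B * T by nra.
    move=> h1 h2 h3 h4 h5. have <- : RInt g (INR k * T) S + (RInt g 0 (INR k * T) - INR k * RInt g 0 T)
      = RInt g 0 S - INR k * RInt g 0 T by lra.
    lra. }
  have cT : Rabs (RInt g 0 T) <= T * B by have := int_bound 0 T ltac:(lra); rewrite Rminus_0_r.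
  rewrite /window_mean !Rplus_0_l.
  have -> : RInt g 0 S / S - RInt g 0 T / T = (RInt g 0 S - INR k * RInt g 0 T) / S
      + RInt g 0 T * (INR k * T - S) / (S * T) by field; lra.
  apply: Rle_trans (Rabs_triang _ _) _.
  have t1 : Rabs ((RInt g 0 S - INR k * RInt g 0 T) / S) <= eps + 2 * L * B / T + B * T / S.
  { apply: abs_div_le; first lra. apply: Rle_trans kc _.
    have -> : (eps + 2 * L * B / T + B * T / S) * S = (eps * T + 2 * L * B) * (S / T) + B * T by field; lra.
    have : INR k <= S / T by apply: (Rmult_le_reg_r T) => //; have -> : S / T * T = S by field; lra.
    have : 0 <= eps * T + 2 * L * B.
    { have [tau [[t0 tL] Hg]] := AP 0. have := Hg 0. have := Rabs_pos (g (0 + tau) - g 0). nra. }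
    nra. }
  have t2 : Rabs (RInt g 0 T * (INR k * T - S) / (S * T)) <= B * T / S.
  { apply: abs_div_le; first nra. rewrite Rabs_mult (Rabs_left1 (_ - _)); last lra.
    have -> : B * T / S * (S * T) = T * B * T by field; lra.
    apply: Rmult_le_compat; [exact: Rabs_pos | lra | exact: cT | lra]. }
  lra.
Qed.

Lemma mean_cauchy e : 0 < e -> exists N, 0 < N /\ forall S S', N <= S -> N <= S' ->
  Rabs (window_mean 0 S - window_mean 0 S') <= e.
Proof.
  move=> He. have B0 := B_ge0.
  have [L [HL APL]] := g_ap (e / 6) ltac:(lra).
  set T := 1 + 2 * L * B / (e / 6).
  have q0 : 0 <= 2 * L * B / (e / 6) by apply: Rmult_le_pos; [nra | left; apply: Rinv_0_lt_compat; lra].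
  have HT2 : 2 * L * B / T <= e / 6.
  { apply: (Rmult_le_reg_r T); first by rewrite /T; lra.
    have -> : 2 * L * B / T * T = 2 * L * B by field; rewrite /T; lra.
    have -> : e / 6 * T = e / 6 + 2 * L * B by rewrite /T; field; lra. lra. }
  have HT0 : 0 < T by rewrite /T; lra.
  set N := T + 2 * B * T / (e / 6).
  have q1 : 0 <= 2 * B * T / (e / 6) by apply: Rmult_le_pos; [rewrite /T; nra | left; apply: Rinv_0_lt_compat; lra].
  have key S : N <= S -> Rabs (window_mean 0 S - window_mean 0 T) <= e / 2.
  { move=> HS.
    apply: Rle_trans (mean_compare (e / 6) L T S HT0 ltac:(rewrite /N in HS; lra) APL) _.
    have : 2 * B * T / S <= e / 6.
    { apply: (Rmult_le_reg_r S); first by rewrite /N in HS; lra.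
      have -> : 2 * B * T / S * S = 2 * B * T by field; rewrite /N in HS; lra.
      have : 2 * B * T = e / 6 * (N - T) by rewrite /N; field; lra. nra. }
    lra. }
  exists N. split; first by rewrite /N; lra.
  move=> S S' H1 H2. have := key S H1. have := key S' H2.
  have := abs_sub_le (window_mean 0 S - window_mean 0 T) (window_mean 0 S' - window_mean 0 T).
  have -> : window_mean 0 S - window_mean 0 T - (window_mean 0 S' - window_mean 0 T)
    = window_mean 0 S - window_mean 0 S' by ring.
  lra.
Qed.

Lemma forward_mean : exists M, forall e, 0 < e -> exists N, 0 < N /\ forall S, N <= S ->
  Rabs (window_mean 0 S - M) <= e.
Proof.
  set u := fun m : nat => window_mean 0 (INR m).
  have cu : ex_lim_seq_cauchy u.
  { move=> [e He] /=. have [N [HN HC]] := mean_cauchy (e / 2) ltac:(lra).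
    have [K HK] := nat_unbounded N. exists K => p q hp hq.
    move/le_INR: hp => hp. move/le_INR: hq => hq.
    have := HC (INR p) (INR q) ltac:(lra) ltac:(lra). rewrite /u. lra. }
  have /is_lim_seq_Reals Hl := Lim_seq_correct' u (proj2 (ex_lim_seq_cauchy_corr u) cu).
  exists (real (Lim_seq u)) => e He.
  have [N [HN HC]] := mean_cauchy (e / 2) ltac:(lra).
  exists N. split => // S HS.
  have [K1 HK1] := Hl (e / 2) ltac:(lra).
  have [K2 HK2] := nat_unbounded N.
  have h1 := HK1 (max K1 K2) (Nat.le_max_l _ _).
  have h2 : INR K2 <= INR (max K1 K2) by apply: le_INR; apply: Nat.le_max_r.
  have h3 := HC S (INR (max K1 K2)) HS ltac:(lra).
  rewrite /R_dist in h1. change (u (max K1 K2)) with (window_mean 0 (INR (max K1 K2))) in h1.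
  have := Rabs_triang (window_mean 0 S - window_mean 0 (INR (max K1 K2))) (window_mean 0 (INR (max K1 K2)) - real (Lim_seq u)).
  have -> : window_mean 0 S - window_mean 0 (INR (max K1 K2)) + (window_mean 0 (INR (max K1 K2)) - real (Lim_seq u))
    = window_mean 0 S - real (Lim_seq u) by ring.
  lra.
Qed.

Lemma window_mean_position e : 0 < e -> exists N, 0 < N /\ forall S s, N <= S ->
  Rabs (window_mean s S - window_mean 0 S) <= e.
Proof.
  move=> He. have B0 := B_ge0.
  have [L [HL APL]] := g_ap (e / 2) ltac:(lra).
  have hh : 0 <= 4 * L * B / e by apply: Rmult_le_pos; [nra | left; apply: Rinv_0_lt_compat; lra].
  exists (1 + 4 * L * B / e). split; first lra. move=> S s HS.
  have [tau [Ht Hg]] := APL s.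
  have W := window_shift_estimate (e / 2) L s S tau ltac:(lra) Ht Hg.
  rewrite /window_mean Rplus_0_l.
  have -> : RInt g s (s + S) / S - RInt g 0 S / S = (RInt g s (s + S) - RInt g 0 S) / S by field; lra.
  apply: abs_div_le; first lra. apply: Rle_trans W _.
  have : 4 * L * B <= e * (S - 1).
  { have -> : 4 * L * B = e * (4 * L * B / e) by field; lra. nra. }
  nra.
Qed.

Theorem bohr_mean_exists : exists M, time_avg_cv g M.
Proof.
  have [M HM] := forward_mean. exists M => eps He.
  have [N1 [HN1 H1]] := HM (eps / 3) ltac:(lra).
  have [N2 [HN2 H2]] := window_mean_position (eps / 3) ltac:(lra).
  exists (N1 + N2). split; first lra. move=> T HT.
  exists (RInt g (Rmin 0 T) (Rmax 0 T)). split.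
  { exists (ex_RInt_Reals_0 _ _ _ (g_integrable _ _)). by rewrite -RInt_Reals. }
  case: (Rle_dec 0 T) => hT.
  - rewrite Rmin_left ?Rmax_right ?(Rabs_right T); try lra.
    rewrite Rabs_right in HT; last lra.
    have := H1 T ltac:(lra). rewrite /window_mean Rplus_0_l. lra.
  - rewrite Rmin_right ?Rmax_left ?(Rabs_left T); try lra.
    rewrite Rabs_left in HT; last lra.
    have := H1 (- T) ltac:(lra). have := H2 (- T) T ltac:(lra).
    rewrite /window_mean Rplus_0_l (_ : T + - T = 0); last ring.
    have := Rabs_triang (RInt g T 0 / - T - RInt g 0 (- T) / - T) (RInt g 0 (- T) / - T - M).
    have -> : RInt g T 0 / - T - RInt g 0 (- T) / - T + (RInt g 0 (- T) / - T - M)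
      = RInt g T 0 / - T - M by ring.
    lra.
Qed.

End BohrMean.

Lemma time_avg_forward {f : R -> R} {M eps : R} : time_avg_cv f M -> 0 < eps -> exists N, 0 < N /\
  forall T, N < T -> ex_RInt f 0 T /\ Rabs (RInt f 0 T / T - M) < eps.
Proof.
  move=> H He. have [N [HN HT]] := H eps He. exists N. split => // T hT.
  have [v [[pr Hv] Hl]] := HT T ltac:(rewrite Rabs_right; lra).
  move: pr Hv Hl. rewrite Rmin_left ?Rmax_right ?(Rabs_right T); try lra.
  move=> pr Hv Hl. split; first exact: ex_RInt_Reals_1.
  by rewrite (RInt_Reals _ _ _ pr) Hv.
Qed.

Lemma time_avg_bound {f1 f2 f3 : R -> R} {M1 M2 M3 : R} (c K : R) :
  time_avg_cv f1 M1 -> time_avg_cv f2 M2 -> time_avg_cv f3 M3 ->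
  (forall t, Rabs (f1 t - f2 t - c * f3 t) <= K) ->
  Rabs (M1 - M2 - c * M3) <= K.
Proof.
  move=> H1 H2 H3 HK.
  apply: (le_of_le_eps _ _ (3 + Rabs c)); first by have := Rabs_pos c; lra.
  move=> eps He.
  have [N1 [P1 Q1]] := time_avg_forward H1 He.
  have [N2 [P2 Q2]] := time_avg_forward H2 He.
  have [N3 [P3 Q3]] := time_avg_forward H3 He.
  set T := N1 + N2 + N3 + 1. have T0 : 0 < T by rewrite /T; lra.
  have [e1 q1] := Q1 T ltac:(rewrite /T; lra).
  have [e2 q2] := Q2 T ltac:(rewrite /T; lra).
  have [e3 q3] := Q3 T ltac:(rewrite /T; lra).
  have i := is_RInt_minus _ _ _ _ _ _ (is_RInt_minus _ _ _ _ _ _ (RInt_correct _ _ _ e1)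
    (RInt_correct _ _ _ e2)) (is_RInt_scal _ _ _ c _ (RInt_correct _ _ _ e3)).
  have bnd := abs_RInt_le_const _ 0 T K ltac:(lra) (ex_intro _ _ i) (fun t _ => HK t).
  rewrite (is_RInt_unique _ _ _ _ i) in bnd.
  change (Rabs (RInt f1 0 T - RInt f2 0 T - c * RInt f3 0 T) <= (T - 0) * K) in bnd.
  move: bnd q1 q2 q3.
  set a := RInt f1 0 T. set b := RInt f2 0 T. set d := RInt f3 0 T.
  move=> bnd q1 q2 q3.
  have -> : M1 - M2 - c * M3 = (a - b - c * d) / T - (a / T - M1) + (b / T - M2) + c * (d / T - M3)
    by field; lra.
  have t1 : Rabs ((a - b - c * d) / T) <= K.
  { apply: abs_div_le => //. rewrite Rminus_0_r in bnd. lra. }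
  have t4 : Rabs (c * (d / T - M3)) <= Rabs c * eps.
  { rewrite Rabs_mult. apply: Rmult_le_compat_l; [exact: Rabs_pos | lra]. }
  have := Rabs_triang ((a - b - c * d) / T - (a / T - M1) + (b / T - M2)) (c * (d / T - M3)).
  have := Rabs_triang ((a - b - c * d) / T - (a / T - M1)) (b / T - M2).
  have := abs_sub_le ((a - b - c * d) / T) (a / T - M1).
  lra.
Qed.

(** * The rotations [Phi_w] *)

Lemma Phi_fst {n : nat} w (a : Cn n) j : fst (Phi w a j) = cos (w j) * fst (a j) - sin (w j) * snd (a j).
Proof. by []. Qed.

Lemma Phi_snd {n : nat} w (a : Cn n) j : snd (Phi w a j) = cos (w j) * snd (a j) + sin (w j) * fst (a j).
Proof. rewrite /Phi /Cmul /Cexpi /=. ring. Qed.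

Lemma rot_bound {c s x y K : R} : Rabs c <= 1 -> Rabs s <= 1 -> Rabs x <= K -> Rabs y <= K ->
  Rabs (c * x - s * y) <= 2 * K /\ Rabs (c * y + s * x) <= 2 * K.
Proof.
  move=> hc hs hx hy.
  have m u v : Rabs u <= 1 -> Rabs v <= K -> Rabs (u * v) <= K.
  { move=> hu hv. rewrite Rabs_mult. have := Rabs_pos u. have := Rabs_pos v. nra. }
  have := m c x hc hx. have := m s y hs hy. have := m c y hc hy. have := m s x hs hx.
  have := abs_sub_le (c * x) (s * y). have := Rabs_triang (c * y) (s * x). lra.
Qed.

Lemma rotated_pair_lipschitz {x y u v L d : R} : Rabs x <= 1 -> Rabs y <= 1 ->
  Rabs u + Rabs v <= L * d -> Rabs (x * u - y * v) <= L * d /\ Rabs (x * v + y * u) <= L * d.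
Proof.
  move=> bx bxy huv.
  have m p q : Rabs p <= 1 -> Rabs (p * q) <= Rabs q.
  { move=> bp. rewrite Rabs_mult. have := Rabs_pos q. have := Rabs_pos p. nra. }
  have := m _ u bx. have := m _ v bxy. have := m _ v bx. have := m _ u bxy.
  have := abs_sub_le (x * u) (y * v). have := Rabs_triang (x * v) (y * u). lra.
Qed.

Lemma Phi_box {n : nat} {M : R} w {a : Cn n} : Cbox M a -> Cbox (2 * M) (Phi w a).
Proof.
  move=> Ha k. rewrite Phi_fst Phi_snd. have [h1 h2] := Ha k. have [c1 c2] := cos_sin_bound (w k).
  exact: rot_bound.
Qed.

Lemma Phi_dist_le {n : nat} w {b c : Cn n} {d : R} : dist_le b c d -> dist_le (Phi w b) (Phi w c) (2 * d).
Proof.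
  move=> H k. rewrite !Phi_fst !Phi_snd. have [h1 h2] := H k. have [c1 c2] := cos_sin_bound (w k).
  have [e1 e2] := rot_bound c1 c2 h1 h2.
  split.
  - by have -> : cos (w k) * fst (b k) - sin (w k) * snd (b k) - (cos (w k) * fst (c k) - sin (w k) * snd (c k))
      = cos (w k) * (fst (b k) - fst (c k)) - sin (w k) * (snd (b k) - snd (c k)) by ring.
  - by have -> : cos (w k) * snd (b k) + sin (w k) * fst (b k) - (cos (w k) * snd (c k) + sin (w k) * fst (c k))
      = cos (w k) * (snd (b k) - snd (c k)) + sin (w k) * (fst (b k) - fst (c k)) by ring.
Qed.

Lemma Phi_close {n : nat} {M d : R} {w w' : 'I_n -> R} {a : Cn n} : Cbox M a -> (forall k, near_2piZ d (w k - w' k)) ->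
  near ((2 * M + 1) * d) (Phi w' a) (Phi w a).
Proof.
  move=> Ha H k. rewrite !Phi_fst !Phi_snd.
  have [c1 s1] := trig_close (H k). have [h1 h2] := Ha k.
  have d0 : 0 < d by have := Rabs_pos (cos (w k) - cos (w' k)); lra.
  have M0 : 0 <= M by have := Rabs_pos (fst (a k)); lra.
  have E p q x : Rabs (p - q) < d -> Rabs x <= M -> Rabs (p * x - q * x) <= M * d.
  { move=> hpq hx. rewrite -Rmult_minus_distr_r Rabs_mult. have := Rabs_pos x. have := Rabs_pos (p - q). nra. }
  have := E _ _ _ c1 h1. have := E _ _ _ s1 h2. have := E _ _ _ c1 h2. have := E _ _ _ s1 h1.
  move=> u1 u2 u3 u4. split.
  - have -> : cos (w k) * fst (a k) - sin (w k) * snd (a k) - (cos (w' k) * fst (a k) - sin (w' k) * snd (a k))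
      = (cos (w k) * fst (a k) - cos (w' k) * fst (a k)) - (sin (w k) * snd (a k) - sin (w' k) * snd (a k)) by ring.
    have := abs_sub_le (cos (w k) * fst (a k) - cos (w' k) * fst (a k)) (sin (w k) * snd (a k) - sin (w' k) * snd (a k)).
    nra.
  - have -> : cos (w k) * snd (a k) + sin (w k) * fst (a k) - (cos (w' k) * snd (a k) + sin (w' k) * fst (a k))
      = (cos (w k) * snd (a k) - cos (w' k) * snd (a k)) + (sin (w k) * fst (a k) - sin (w' k) * fst (a k)) by ring.
    have := Rabs_triang (cos (w k) * snd (a k) - cos (w' k) * snd (a k)) (sin (w k) * fst (a k) - sin (w' k) * fst (a k)).
    nra.
Qed.

Lemma Phi_upd_x {n : nat} w (a : Cn n) j s : Phi w (upd a j (fst (a j) + s, snd (a j))) =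
  upd (Phi w a) j (fst (Phi w a j) + s * cos (w j), snd (Phi w a j) + s * sin (w j)).
Proof.
  apply: functional_extensionality => k. rewrite /Phi /upd. case: eqP => [->|_] //.
  rewrite /Cmul /Cexpi /=. f_equal; ring.
Qed.

Lemma Phi_upd_y {n : nat} w (a : Cn n) j s : Phi w (upd a j (fst (a j), snd (a j) + s)) =
  upd (Phi w a) j (fst (Phi w a j) + s * - sin (w j), snd (Phi w a j) + s * cos (w j)).
Proof.
  apply: functional_extensionality => k. rewrite /Phi /upd. case: eqP => [->|_] //.
  rewrite /Cmul /Cexpi /=. f_equal; ring.
Qed.

(** * Continuous functions on the torus and their quasi-periodic averages

  A function [P] of the angles [w : 'I_n -> R] is a continuous function on the
  torus [(R / 2 pi Z)^n] when it is bounded and uniformly continuous for the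
  distance modulo [2 pi].  Along every linear flow [t |-> Lam t] such a function is
  Bohr almost periodic, so its time average exists. *)

Definition torus_function {n : nat} (P : ('I_n -> R) -> R) : Prop :=
  (exists B, forall w, Rabs (P w) <= B) /\
  (forall eps, 0 < eps -> exists del, 0 < del /\ forall w w',
     (forall k, near_2piZ del (w k - w' k)) -> Rabs (P w - P w') <= eps).

Lemma near_2piZ_all_mono {n : nat} {d1 d2 : R} {w w' : 'I_n -> R} : d1 <= d2 ->
  (forall k, near_2piZ d1 (w k - w' k)) -> forall k, near_2piZ d2 (w k - w' k).
Proof. move=> h H k. exact: near_2piZ_mono h (H k). Qed.

Lemma torus_function_plus {n : nat} (P1 P2 : ('I_n -> R) -> R) :
  torus_function P1 -> torus_function P2 -> torus_function (fun w => P1 w + P2 w).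
Proof.
  move=> [[B1 hB1] U1] [[B2 hB2] U2]. split.
  - exists (B1 + B2) => w. have := Rabs_triang (P1 w) (P2 w). have := hB1 w. have := hB2 w. lra.
  - move=> eps he. have [d1 [d10 h1]] := U1 (eps / 2) ltac:(lra). have [d2 [d20 h2]] := U2 (eps / 2) ltac:(lra).
    exists (Rmin d1 d2). split; first exact: Rmin_glb_lt.
    move=> w w' H. have := h1 w w' (near_2piZ_all_mono (Rmin_l _ _) H).
    have := h2 w w' (near_2piZ_all_mono (Rmin_r _ _) H).
    have := Rabs_triang (P1 w - P1 w') (P2 w - P2 w').
    have -> : P1 w - P1 w' + (P2 w - P2 w') = P1 w + P2 w - (P1 w' + P2 w') by ring. lra.
Qed.

Lemma torus_function_opp {n : nat} (P : ('I_n -> R) -> R) :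
  torus_function P -> torus_function (fun w => - P w).
Proof.
  move=> [[B hB] U]. split.
  - exists B => w. rewrite Rabs_Ropp. exact: hB.
  - move=> eps he. have [d [d0 h]] := U eps he. exists d. split => // w w' H.
    have -> : - P w - - P w' = - (P w - P w') by ring. rewrite Rabs_Ropp. exact: h.
Qed.

Lemma torus_function_mult {n : nat} (P1 P2 : ('I_n -> R) -> R) :
  torus_function P1 -> torus_function P2 -> torus_function (fun w => P1 w * P2 w).
Proof.
  move=> [[B1 hB1] U1] [[B2 hB2] U2].
  have B10 : 0 <= B1 by have := hB1 (fun _ => 0); have := Rabs_pos (P1 (fun _ => 0)); lra.
  have B20 : 0 <= B2 by have := hB2 (fun _ => 0); have := Rabs_pos (P2 (fun _ => 0)); lra.
  split.
  - exists (B1 * B2) => w. rewrite Rabs_mult. apply: Rmult_le_compat; auto using Rabs_pos.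
  - move=> eps he.
    have [d1 [d10 h1]] := U1 (eps / (2 * (B2 + 1))) ltac:(apply: Rdiv_lt_0_compat; lra).
    have [d2 [d20 h2]] := U2 (eps / (2 * (B1 + 1))) ltac:(apply: Rdiv_lt_0_compat; lra).
    exists (Rmin d1 d2). split; first exact: Rmin_glb_lt.
    move=> w w' H. have e1 := h1 w w' (near_2piZ_all_mono (Rmin_l _ _) H).
    have e2 := h2 w w' (near_2piZ_all_mono (Rmin_r _ _) H).
    have -> : P1 w * P2 w - P1 w' * P2 w' = P1 w * (P2 w - P2 w') + P2 w' * (P1 w - P1 w') by ring.
    apply: Rle_trans (Rabs_triang _ _) _. rewrite !Rabs_mult.
    have t1 : Rabs (P1 w) * Rabs (P2 w - P2 w') <= (B1 + 1) * (eps / (2 * (B1 + 1))).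
    { apply: Rmult_le_compat; auto using Rabs_pos. have := hB1 w. lra. }
    have t2 : Rabs (P2 w') * Rabs (P1 w - P1 w') <= (B2 + 1) * (eps / (2 * (B2 + 1))).
    { apply: Rmult_le_compat; auto using Rabs_pos. have := hB2 w'. lra. }
    have q1 : (B1 + 1) * (eps / (2 * (B1 + 1))) = eps / 2 by field; lra.
    have q2 : (B2 + 1) * (eps / (2 * (B2 + 1))) = eps / 2 by field; lra.
    lra.
Qed.

Lemma torus_function_cos {n : nat} (j : 'I_n) : torus_function (fun w : 'I_n -> R => cos (w j)).
Proof.
  split; first by exists 1 => w; apply cos_sin_bound.
  move=> eps he. exists eps. split => // w w' H.
  have [h1 _] := trig_close (H j). lra.
Qed.

Lemma torus_function_sin {n : nat} (j : 'I_n) : torus_function (fun w : 'I_n -> R => sin (w j)).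
Proof.
  split; first by exists 1 => w; apply cos_sin_bound.
  move=> eps he. exists eps. split => // w w' H.
  have [_ h1] := trig_close (H j). lra.
Qed.

Lemma torus_function_orbit {n : nat} (g : Cn n -> R) (a : Cn n) : continuous_Cn g ->
  torus_function (fun w : 'I_n -> R => g (Phi (fun k => - w k) a)).
Proof.
  move=> gc. have M0 := box_radius_ge0 a. have Ha := box_radius_box a.
  split.
  - have [K [K0 HK]] := box_bounded (2 * box_radius a) (cont_locally_bounded gc).
    exists K => w. apply: HK. exact: Phi_box.
  - move=> eps he. have [d0 [d00 Hd]] := box_uniform_continuity (2 * box_radius a) gc eps he.
    set d := d0 / (2 * box_radius a + 1).
    have dpos : 0 < d by apply: Rdiv_lt_0_compat; lra.
    exists d. split => // w w' H.
    have H' : forall k, near_2piZ d ((fun k => - w k) k - (fun k => - w' k) k).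
    { move=> k /=. have -> : - w k - - w' k = - (w k - w' k) by ring. exact: near_2piZ_opp. }
    have := Phi_close Ha H'.
    have -> : (2 * box_radius a + 1) * d = d0 by rewrite /d; field; lra.
    move=> Hn. left. apply: Hd => //. exact: Phi_box.
Qed.

Lemma continuous_of_eps (g : R -> R) t : (forall eps, 0 < eps -> exists del, 0 < del /\
  forall t', Rabs (t' - t) < del -> Rabs (g t' - g t) < eps) -> continuous g t.
Proof.
  move=> H. apply/continuity_pt_filterlim => eps he.
  have [d [d0 Hd]] := H eps he. exists d. split => // x [_ hx]. exact: Hd.
Qed.

Theorem torus_function_mean {n : nat} (Lam : 'I_n -> R) (P : ('I_n -> R) -> R) :
  torus_function P -> exists M, time_avg_cv (fun t => P (fun k => Lam k * t)) M.
Proof.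
  move=> [[B hB] U].
  set S := fmax (fun k : 'I_n => Rabs (Lam k)).
  have S0 : 0 <= S := fmax_ge0 _.
  have SL k : Rabs (Lam k) <= S := fmax_ge (fun k : 'I_n => Rabs (Lam k)) k.
  apply: (bohr_mean_exists _ _ B).
  - move=> t. apply: continuous_of_eps => eps he. have [d [d0 Hd]] := U (eps / 2) ltac:(lra).
    exists (d / (S + 1)). split; first by apply: Rdiv_lt_0_compat; lra.
    move=> t' ht.
    suff : forall k, near_2piZ d (Lam k * t' - Lam k * t) by move/Hd; lra.
    move=> k. exists 0%Z. rewrite Rmult_0_r Rminus_0_r.
    have -> : Lam k * t' - Lam k * t = Lam k * (t' - t) by ring. rewrite Rabs_mult.
    have : Rabs (t' - t) * (S + 1) < d.
    { have := Rmult_lt_compat_r (S + 1) _ _ ltac:(lra) ht.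
      by have -> : d / (S + 1) * (S + 1) = d by field; lra. }
    have := SL k. have := Rabs_pos (t' - t). have := Rabs_pos (Lam k). nra.
  - move=> t. exact: hB.
  - move=> eps he. have [d [d0 Hd]] := U eps he.
    have [L [L0 HL]] := returns_relatively_dense n Lam d d0.
    exists L. split => // s. have [tau [h1 h2]] := HL s. exists tau. split => // t.
    apply: Hd => k /=. by have -> : Lam k * (t + tau) - Lam k * t = Lam k * tau by ring.
Qed.

(** * Differentiating and bounding time averages *)

Lemma derivable_of_estimate (F : R -> R) x0 l :
  (forall eps, 0 < eps -> exists del, 0 < del /\ forall s, Rabs s < del ->
     Rabs (F (x0 + s) - F x0 - s * l) <= Rabs s * eps) -> derivable_pt_lim F x0 l.
Proof.
  move=> H eps he. have [d [d0 Hd]] := H (eps / 2) ltac:(lra).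
  exists (mkposreal d d0) => s hs hsd /=.
  have sp : 0 < Rabs s by apply: Rabs_pos_lt.
  have -> : (F (x0 + s) - F x0) / s - l = (F (x0 + s) - F x0 - s * l) / s by field.
  have : Rabs ((F (x0 + s) - F x0 - s * l) / s) <= eps / 2.
  { rewrite /Rdiv Rabs_mult Rabs_inv. apply: (Rmult_le_reg_r (Rabs s)) => //.
    rewrite Rmult_assoc Rinv_l; last lra. rewrite Rmult_1_r. have := Hd s hsd. lra. }
  lra.
Qed.

Lemma derivable_time_avg (F : R -> R) (f : R -> R -> R) (p : R -> R) x0 c m :
  (forall x, time_avg_cv (f x) (F x)) -> time_avg_cv p m ->
  (forall eps, 0 < eps -> exists del, 0 < del /\ forall s, Rabs s < del ->
     forall t, Rabs (f (x0 + s) t - f x0 t - s * c * p t) <= Rabs s * eps) ->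
  derivable_pt_lim F x0 (c * m).
Proof.
  move=> HF Hp H. apply: derivable_of_estimate => eps he.
  have [d [d0 Hd]] := H eps he. exists d. split => // s hs.
  rewrite -Rmult_assoc. exact: time_avg_bound (s * c) (Rabs s * eps) (HF (x0 + s)) (HF x0) Hp (Hd s hs).
Qed.

Lemma box_lipschitz_time_avg {n : nat} (f : Cn n -> R -> R) (G : Cn n -> R) :
  (forall b, time_avg_cv (f b) (G b)) ->
  (forall M, exists L, 0 <= L /\ forall b c, Cbox M b -> Cbox M c -> forall d, 0 <= d ->
     dist_le b c d -> forall t, Rabs (f b t - f c t) <= L * d) ->
  box_lipschitz G.
Proof.
  move=> HG Hf M. have [L [L0 HL]] := Hf M. exists L. split => // b c Hb Hc d d0 Hd.
  have := time_avg_bound 0 (L * d) (HG b) (HG c) (HG c).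
  rewrite Rmult_0_l Rminus_0_r. apply=> t. rewrite Rmult_0_l Rminus_0_r. exact: HL.
Qed.

Lemma Cnorm_le z : Cnorm z <= Rabs (fst z) + Rabs (snd z).
Proof.
  have h0 : 0 <= Rabs (fst z) + Rabs (snd z) by have := Rabs_pos (fst z); have := Rabs_pos (snd z); lra.
  rewrite /Cnorm -(sqrt_pow2 _ h0). apply: sqrt_le_1_alt.
  rewrite -(pow2_abs (fst z)) -(pow2_abs (snd z)).
  have := Rabs_pos (fst z). have := Rabs_pos (snd z). nra.
Qed.

Lemma Cnorm_fst z : Rabs (fst z) <= Cnorm z.
Proof.
  rewrite /Cnorm -(sqrt_pow2 _ (Rabs_pos (fst z))). apply: sqrt_le_1_alt.
  rewrite pow2_abs. have : 0 <= snd z ^ 2 by nra. lra.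
Qed.

Lemma Cnorm_snd z : Rabs (snd z) <= Cnorm z.
Proof.
  rewrite /Cnorm -(sqrt_pow2 _ (Rabs_pos (snd z))). apply: sqrt_le_1_alt.
  rewrite pow2_abs. have : 0 <= fst z ^ 2 by nra. lra.
Qed.

Lemma Rabs_half x : Rabs (x / 2) = Rabs x / 2.
Proof. rewrite /Rdiv Rabs_mult Rabs_inv (Rabs_right 2); lra. Qed.

(* The index [i] only witnesses [n > 0], which makes the
   distance bound [d] in [loc_lipschitz] nonnegative. *)
Lemma loc_lipschitz_of_box {n : nat} (i : 'I_n) (f : Cn n -> Defs.C) (G1 G2 : Cn n -> R) :
  (forall b, f b = (G1 b / 2, G2 b / 2)) -> box_lipschitz G1 -> box_lipschitz G2 ->
  loc_lipschitz f.
Proof.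
  move=> Ef H1 H2 a.
  have [L1 [L10 K1]] := H1 (box_radius a + 1). have [L2 [L20 K2]] := H2 (box_radius a + 1).
  exists 1, ((L1 + L2) / 2). split; first lra.
  move=> b c Hb Hc d Hd.
  have Bb := near_box (box_radius_box a) Hb. have Bc := near_box (box_radius_box a) Hc.
  have d0 : 0 <= d by have [e1 _] := Hd i; have := Rabs_pos (fst (b i) - fst (c i)); lra.
  have e1 := K1 b c Bb Bc d d0 Hd. have e2 := K2 b c Bb Bc d d0 Hd.
  apply: Rle_trans (Cnorm_le _) _. rewrite /Csub !Ef /=.
  have q x y : x / 2 - y / 2 = (x - y) / 2 by field.
  rewrite !q !Rabs_half. lra.
Qed.

(** * The averaged Hamiltonian *)

Section EffectiveHamiltonian.
Variable n : nat.
Variable h : Cn n -> R.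
Variables hx hy : 'I_n -> Cn n -> R.
Hypothesis hp : partials h hx hy.
Hypothesis hxc : forall j, continuous_Cn (hx j).
Hypothesis hyc : forall j, continuous_Cn (hy j).
Variable Lam : 'I_n -> R.

Lemma h_continuous : continuous_Cn h.
Proof. exact: continuous_of_box_lipschitz (C1_box_lipschitz hp hxc hyc). Qed.

(* [h] and the vector field [P = 2 i dh/dzbar] along the torus orbit of [a]:
   at angles [w = Lam t] these are the integrands of [<h>] and [<<P>>]. *)
Definition h_orbit (a : Cn n) (w : 'I_n -> R) : R := h (Phi (fun k => - w k) a).
Definition P_orbit (a : Cn n) (w : 'I_n -> R) : Cn n := Phi w (Pvf hx hy (Phi (fun k => - w k) a)).

Lemma P_orbit_re a j w : fst (P_orbit a w j) =
  cos (w j) * - hy j (Phi (fun k => - w k) a) - sin (w j) * hx j (Phi (fun k => - w k) a).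
Proof. by rewrite /P_orbit Phi_fst. Qed.

Lemma P_orbit_im a j w : snd (P_orbit a w j) =
  cos (w j) * hx j (Phi (fun k => - w k) a) + sin (w j) * - hy j (Phi (fun k => - w k) a).
Proof. by rewrite /P_orbit Phi_snd. Qed.

Lemma torus_h_orbit a : torus_function (h_orbit a).
Proof. exact: torus_function_orbit h_continuous. Qed.

Lemma torus_P_re a j : torus_function (fun w => fst (P_orbit a w j)).
Proof.
  have -> : (fun w => fst (P_orbit a w j)) = (fun w => cos (w j) * - hy j (Phi (fun k => - w k) a)
      + - (sin (w j) * hx j (Phi (fun k => - w k) a))).
  { apply: functional_extensionality => w. rewrite P_orbit_re. ring. }
  apply: torus_function_plus; last apply: torus_function_opp;
    apply: torus_function_mult; try exact: torus_function_cos; try exact: torus_function_sin.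
  all: try exact: torus_function_orbit a (hxc j).
  apply: torus_function_opp. exact: torus_function_orbit a (hyc j).
Qed.

Lemma torus_P_im a j : torus_function (fun w => snd (P_orbit a w j)).
Proof.
  have -> : (fun w => snd (P_orbit a w j)) = (fun w => cos (w j) * hx j (Phi (fun k => - w k) a)
      + sin (w j) * - hy j (Phi (fun k => - w k) a)).
  { apply: functional_extensionality => w. exact: P_orbit_im. }
  apply: torus_function_plus; apply: torus_function_mult;
    try exact: torus_function_cos; try exact: torus_function_sin.
  all: try exact: torus_function_orbit a (hxc j).
  apply: torus_function_opp. exact: torus_function_orbit a (hyc j).
Qed.

Definition quasi_mean {P : ('I_n -> R) -> R} (HP : torus_function P) : R :=
  proj1_sig (constructive_indefinite_description _ (torus_function_mean Lam P HP)).

Lemma quasi_mean_spec P (HP : torus_function P) :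
  time_avg_cv (fun t => P (fun k => Lam k * t)) (quasi_mean HP).
Proof. exact: proj2_sig (constructive_indefinite_description _ (torus_function_mean Lam P HP)). Qed.

Definition h_avg (a : Cn n) : R := quasi_mean (torus_h_orbit a).
Definition P_re_avg (j : 'I_n) (a : Cn n) : R := quasi_mean (torus_P_re a j).
Definition P_im_avg (j : 'I_n) (a : Cn n) : R := quasi_mean (torus_P_im a j).

Lemma partials_uniform_near_orbit (a : Cn n) j eps : 0 < eps -> exists del, 0 < del /\ forall w c,
  near del (Phi w a) c -> Rabs (hx j c - hx j (Phi w a)) < eps /\ Rabs (hy j c - hy j (Phi w a)) < eps.
Proof.
  move=> he.
  have [d1 [d10 H1]] := box_uniform_continuity (2 * box_radius a) (hxc j) eps he.
  have [d2 [d20 H2]] := box_uniform_continuity (2 * box_radius a) (hyc j) eps he.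
  exists (Rmin d1 d2). split; first exact: Rmin_glb_lt.
  move=> w c Hc. have Hb := Phi_box w (box_radius_box a). split.
  - apply: H1 => //. exact: near_mono (Rmin_l _ _) Hc.
  - apply: H2 => //. exact: near_mono (Rmin_r _ _) Hc.
Qed.

Lemma orbit_linearization (a : Cn n) j (dir : ('I_n -> R) -> R * R) eps :
  (forall w, Rabs (dir w).1 <= 1 /\ Rabs (dir w).2 <= 1) -> 0 < eps ->
  exists del, 0 < del /\ forall s, Rabs s < del -> forall w,
  Rabs (h (upd (Phi w a) j (fst (Phi w a j) + s * (dir w).1, snd (Phi w a j) + s * (dir w).2))
        - h (Phi w a) - s * ((dir w).1 * hx j (Phi w a) + (dir w).2 * hy j (Phi w a))) <= Rabs s * eps.
Proof.
  move=> Hdir he. have [d [d0 U]] := partials_uniform_near_orbit a j (eps / 2) ltac:(lra).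
  exists d. split => // s hs w. have [c1 s1] := Hdir w.
  have m u : Rabs u <= 1 -> Rabs (s * u) <= Rabs s by rewrite Rabs_mult; have := Rabs_pos s; nra.
  have p1 := m _ c1. have p2 := m _ s1.
  have := linearization_estimate hp (Phi w a) j (dir w).1 (dir w).2 s (eps / 2) d d0 (U w) ltac:(lra) ltac:(lra).
  have -> : s * ((dir w).1 * hx j (Phi w a) + (dir w).2 * hy j (Phi w a)) =
    s * (dir w).1 * hx j (Phi w a) + s * (dir w).2 * hy j (Phi w a) by ring.
  move=> H. apply: Rle_trans H _. nra.
Qed.

Lemma upd_self (a : Cn n) j : upd a j (fst (a j), snd (a j)) = a.
Proof. by rewrite -surjective_pairing upd_same. Qed.

(* [d<h>/dx_j = Im <<P>>_j]: differentiate under the time average. *)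
Lemma h_avg_pd_x a j : pd_x h_avg a j (P_im_avg j a).
Proof.
  rewrite /pd_x -[P_im_avg j a]Rmult_1_l.
  apply: (derivable_time_avg _ (fun x t => h_orbit (upd a j (x, snd (a j))) (fun k => Lam k * t))
            (fun t => snd (P_orbit a (fun k => Lam k * t) j))).
  - move=> x. exact: quasi_mean_spec.
  - exact: quasi_mean_spec.
  - move=> eps he.
    have [d [d0 Hd]] := orbit_linearization a j (fun w => (cos (w j), sin (w j))) eps (fun w => cos_sin_bound _) he.
    exists d. split => // s hs t. have := Hd s hs (fun k => - (Lam k * t)).
    rewrite /h_orbit upd_self Phi_upd_x P_orbit_im /= cos_neg sin_neg.
    congr (Rabs (_ - _ - _) <= _). ring.
Qed.

Lemma h_avg_pd_y a j : pd_y h_avg a j (- P_re_avg j a).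
Proof.
  rewrite /pd_y (_ : - P_re_avg j a = -1 * P_re_avg j a); last ring.
  apply: (derivable_time_avg _ (fun x t => h_orbit (upd a j (fst (a j), x)) (fun k => Lam k * t))
            (fun t => fst (P_orbit a (fun k => Lam k * t) j))).
  - move=> x. exact: quasi_mean_spec.
  - exact: quasi_mean_spec.
  - move=> eps he.
    have Hdir w : Rabs (- sin (w j)) <= 1 /\ Rabs (cos (w j)) <= 1.
    { rewrite Rabs_Ropp. have [c s] := cos_sin_bound (w j). by split. }
    have [d [d0 Hd]] := orbit_linearization a j (fun w => (- sin (w j), cos (w j))) eps Hdir he.
    exists d. split => // s hs t. have := Hd s hs (fun k => - (Lam k * t)).
    rewrite /h_orbit upd_self Phi_upd_y P_orbit_re /= cos_neg sin_neg.
    congr (Rabs (_ - _ - _) <= _). ring.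
Qed.

Lemma h_avg_partials : partials h_avg P_im_avg (fun j a => - P_re_avg j a).
Proof. move=> a j. split; [exact: h_avg_pd_x | exact: h_avg_pd_y]. Qed.

Hypothesis hxl : forall j, loc_lipschitz_R (hx j).
Hypothesis hyl : forall j, loc_lipschitz_R (hy j).

Lemma orbit_partials_lipschitz j M : exists L, 0 <= L /\ forall b c, Cbox M b -> Cbox M c ->
  forall d, 0 <= d -> dist_le b c d -> forall w,
    Rabs (hx j (Phi (fun k => - w k) b) - hx j (Phi (fun k => - w k) c)) +
    Rabs (hy j (Phi (fun k => - w k) b) - hy j (Phi (fun k => - w k) c)) <= L * d.
Proof.
  have [L1 [L10 H1]] := box_lipschitz_of_loc (hxl j) (2 * M).
  have [L2 [L20 H2]] := box_lipschitz_of_loc (hyl j) (2 * M).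
  exists (2 * (L1 + L2)). split; first lra.
  move=> b c Hb Hc d d0 Hd w.
  have Bb := Phi_box (fun k => - w k) Hb. have Bc := Phi_box (fun k => - w k) Hc.
  have Cd := Phi_dist_le (fun k => - w k) Hd.
  have := H1 _ _ Bb Bc (2 * d) ltac:(lra) Cd. have := H2 _ _ Bb Bc (2 * d) ltac:(lra) Cd. lra.
Qed.

Lemma P_re_avg_lipschitz j : box_lipschitz (P_re_avg j).
Proof.
  apply: (box_lipschitz_time_avg (fun b t => fst (P_orbit b (fun k => Lam k * t) j))).
  - move=> b. exact: quasi_mean_spec.
  - move=> M. have [L [L0 HL]] := orbit_partials_lipschitz j M. exists L. split => //.
    move=> b c Hb Hc d d0 Hd t. rewrite !P_orbit_re.
    have [c1 s1] := cos_sin_bound (Lam j * t).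
    have [_ H] := rotated_pair_lipschitz c1 s1 (HL b c Hb Hc d d0 Hd (fun k => Lam k * t)).
    apply: Rle_trans H. rewrite -Rabs_Ropp. right. f_equal. ring.
Qed.

Lemma P_im_avg_lipschitz j : box_lipschitz (P_im_avg j).
Proof.
  apply: (box_lipschitz_time_avg (fun b t => snd (P_orbit b (fun k => Lam k * t) j))).
  - move=> b. exact: quasi_mean_spec.
  - move=> M. have [L [L0 HL]] := orbit_partials_lipschitz j M. exists L. split => //.
    move=> b c Hb Hc d d0 Hd t. rewrite !P_orbit_im.
    have [c1 s1] := cos_sin_bound (Lam j * t).
    have [H _] := rotated_pair_lipschitz c1 s1 (HL b c Hb Hc d d0 Hd (fun k => Lam k * t)).
    apply: Rle_trans H. right. f_equal. ring.
Qed.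

(* [<h>] is [C^{1,1}_loc]: its partials are averages of Lipschitz integrands. *)
Lemma h_avg_C11loc : C11loc h_avg.
Proof.
  have Hre j : box_lipschitz (fun a => - P_re_avg j a) := box_lipschitz_opp (P_re_avg_lipschitz j).
  exists P_im_avg, (fun j a => - P_re_avg j a). split; [|split].
  - exact: h_avg_partials.
  - move=> j. split; apply: continuous_of_box_lipschitz; [exact: P_im_avg_lipschitz | exact: Hre].
  - move=> j. split.
    + apply: (loc_lipschitz_of_box j _ (P_im_avg j) (fun a => - - P_re_avg j a)) => //.
      - exact: P_im_avg_lipschitz.
      - exact: box_lipschitz_opp.
    + apply: (loc_lipschitz_of_box j _ (P_im_avg j) (fun a => - P_re_avg j a)) => //.
      exact: P_im_avg_lipschitz.
Qed.

End EffectiveHamiltonian.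

Arguments h_avg {n h hx hy}.
Arguments h_avg_partials {n h hx hy}.
Arguments h_avg_C11loc {n h hx hy}.

Lemma partials_unique {n : nat} {f : Cn n -> R} {fx fy gx gy : 'I_n -> Cn n -> R} :
  partials f fx fy -> partials f gx gy -> fx = gx /\ fy = gy.
Proof.
  move=> H1 H2.
  split; apply: functional_extensionality => j; apply: functional_extensionality => a.
  - exact: uniqueness_limite (proj1 (H1 a j)) (proj1 (H2 a j)).
  - exact: uniqueness_limite (proj2 (H1 a j)) (proj2 (H2 a j)).
Qed.

Lemma loc_lipschitz_R_of_component {n : nat} (g : Cn n -> Defs.C) (u : Cn n -> R) (pr : Defs.C -> R) :
  (forall z, Rabs (pr z) <= Cnorm z) -> (forall b c, pr (Csub (g b) (g c)) = (u b - u c) / 2) ->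
  loc_lipschitz g -> loc_lipschitz_R u.
Proof.
  move=> Hpr Eu Hg p. have [r [L [r0 HL]]] := Hg p. exists r, (2 * L). split => // b c Hb Hc d Hd.
  have := Rle_trans _ _ _ (Hpr _) (HL b c Hb Hc d Hd). rewrite Eu Rabs_half. lra.
Qed.

Lemma C11loc_partials {n : nat} {f : Cn n -> R} {fx fy : 'I_n -> Cn n -> R} :
  C11loc f -> partials f fx fy ->
  (forall j, continuous_Cn (fx j) /\ continuous_Cn (fy j)) /\
  (forall j, loc_lipschitz_R (fx j) /\ loc_lipschitz_R (fy j)).
Proof.
  move=> [gx [gy [Hg [Hc Hl]]]] Hf. have [<- <-] := partials_unique Hg Hf.
  split => // j. split.
  - apply: (loc_lipschitz_R_of_component _ _ fst Cnorm_fst) (proj1 (Hl j)) => b c.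
    rewrite /Csub /dz_of /=. field.
  - apply: (loc_lipschitz_R_of_component _ _ snd Cnorm_snd) (proj2 (Hl j)) => b c.
    rewrite /Csub /dzbar_of /=. field.
Qed.

Theorem theorem5p1 (n : nat) (Lam : 'I_n -> R) (hLam : forall j, Lam j <> 0)
  (h : Cn n -> R) (hC : C11loc h)
  (hx hy : 'I_n -> Cn n -> R) (hpart : partials h hx hy) :
  exists H : Cn n -> R,
    (forall a : Cn n,
       time_avg_cv (fun t => h (Phi (fun j => - (Lam j * t)) a)) (H a)) /\
    C11loc H /\
    (forall Hx Hy : 'I_n -> Cn n -> R, partials H Hx Hy ->
       forall (a : Cn n) (j : 'I_n),
         (* 2 i d<h>/dabar_j (a) = (- H_y, H_x) = <<P>>_j(a) *)
         time_avg_cv (fun t => fst (flow_integrand Lam hx hy a t j)) (- Hy j a) /\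
         time_avg_cv (fun t => snd (flow_integrand Lam hx hy a t j)) (Hx j a)).
Proof.
  have [Hcont Hlip] := C11loc_partials hC hpart.
  have hxc j := proj1 (Hcont j). have hyc j := proj2 (Hcont j).
  have hxl j := proj1 (Hlip j). have hyl j := proj2 (Hlip j).
  exists (h_avg hpart hxc hyc Lam). split; [|split].
  - move=> a. exact: quasi_mean_spec.
  - exact: h_avg_C11loc hpart hxc hyc Lam hxl hyl.
  - move=> Hx Hy HP a j.
    have [-> ->] := partials_unique HP (h_avg_partials hpart hxc hyc Lam).
    rewrite Ropp_involutive. split; exact: quasi_mean_spec.
Qed.
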